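(* Assume the standing assumptions on $A,\Omega,R,K$ stated in the context, and assume that there exists $\theta_0\in]-A,A[$ such that $\min_{\theta\in]-A,A[}\lambda(\theta,0)=\lambda(\theta_0,0)<0$. Then $\mu_\varepsilon\to\lambda(\theta_0,0)$ as $\varepsilon\to0$.
   Context: Standing assumptions: $A>0$; $\Omega=\bigcup_{i=1}^m ]a_i,b_i[\subset\mathbb{R}$ with $a_1<b_1<a_2<\dots<a_m<b_m$; $R\in C^1(\overline\Omega\times[-A,A])$ with $\|R\|_{W^{1,\infty}(\Omega\times]-A,A[)}<C_R$ for a constant $C_R$; $K$ is a $C^1$ even function (defined on the differences $x-y$, $x,y\in\Omega$) with $K>0$, $0<c_K<K<C_K$ and $|K'|<C_K$ for constants $c_K,C_K$. For a function $\phi$ of $x\in\Omega$ (possibly depending on other variables) set $L\phi(x)=\int_\Omega[\phi(x)-\phi(y)]K(x-y)\,dy$. For $\theta\in[-A,A]$ and a bounded function $\rho$ on $\Omega$, $\lambda(\theta,\rho)$ is the principal eigenvalue (eigenvalue with a positive eigenfunction) of $\psi\mapsto-\psi''+L\psi-(R(\cdot,\theta)-\rho)\psi$ on $\Omega$ with Neumann boundary condition $\partial_\nu\psi=0$ on $\partial\Omega$. For $\varepsilon>0$, $\mu_\varepsilon$ is the principal eigenvalue of $\xi\mapsto-\partial_{xx}\xi-\varepsilon^2\partial_{\theta\theta}\xi+L\xi-R\xi$ on $\Omega\times]-A,A[$ with Neumann boundary conditions $\partial_{\nu_x}\xi=\partial_{\nu_\theta}\xi=0$ on $\partial(\Omega\times]-A,A[)$.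 *)

From Stdlib Require Import Reals Lra.
From Coquelicot Require Import Coquelicot.
Open Scope R_scope.

(* Omega = union_{i<m} ]a i, b i[ with a 0 < b 0 < a 1 < ... < b (m-1). *)
Definition intervals_ok (m : nat) (a b : nat -> R) : Prop :=
  (1 <= m)%nat /\
  (forall i, (i < m)%nat -> a i < b i) /\
  (forall i, (S i < m)%nat -> b i < a (S i)).

Definition inOmega (m : nat) (a b : nat -> R) (x : R) : Prop :=
  exists i, (i < m)%nat /\ a i < x < b i.

Definition inOmegaBar (m : nat) (a b : nat -> R) (x : R) : Prop :=
  exists i, (i < m)%nat /\ a i <= x <= b i.

Fixpoint intOmega (m : nat) (a b : nat -> R) (f : R -> R) : R :=
  match m with
  | O => 0
  | S k => intOmega k a b f + RInt f (a k) (b k)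
  end.

Definition Lop (m : nat) (a b : nat -> R) (K : R -> R) (phi : R -> R) (x : R) : R :=
  intOmega m a b (fun y => (phi x - phi y) * K (x - y)).

Definition dx (f : R -> R -> R) (x th : R) : R := Derive (fun y => f y th) x.
Definition dth (f : R -> R -> R) (x th : R) : R := Derive (fun t => f x t) th.
Definition dxx (f : R -> R -> R) (x th : R) : R := Derive_n (fun y => f y th) 2 x.
Definition dthth (f : R -> R -> R) (x th : R) : R := Derive_n (fun t => f x t) 2 th.

Definition cont2 (f : R -> R -> R) (x th : R) : Prop :=
  continuous (fun p : R * R => f (fst p) (snd p)) (x, th).

(* lam is the principal eigenvalue (eigenvalue with a positive classical
   eigenfunction) of psi |-> -psi'' + L psi - (Rf(.,th) - rho) psi on Omega
   with Neumann boundary conditions. *)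
Definition is_principal_eig1 (m : nat) (a b : nat -> R) (K : R -> R)
  (Rf : R -> R -> R) (th : R) (rho : R -> R) (lam : R) : Prop :=
  exists psi : R -> R,
    (forall x, inOmega m a b x -> 0 < psi x) /\
    (forall x, ex_derive psi x) /\
    (forall x, ex_derive (Derive psi) x) /\
    (forall x, inOmegaBar m a b x ->
       continuous psi x /\ continuous (Derive psi) x /\
       continuous (Derive_n psi 2) x) /\
    (forall x, inOmega m a b x ->
       - Derive_n psi 2 x + Lop m a b K psi x - (Rf x th - rho x) * psi x
       = lam * psi x) /\
    (forall i, (i < m)%nat -> Derive psi (a i) = 0 /\ Derive psi (b i) = 0).

Definition is_principal_eig2 (m : nat) (a b : nat -> R) (A : R) (K : R -> R)
  (Rf : R -> R -> R) (eps : R) (mu : R) : Prop :=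
  exists xi : R -> R -> R,
    (forall x th, inOmega m a b x -> -A < th < A -> 0 < xi x th) /\
    (forall x th, ex_derive (fun y => xi y th) x) /\
    (forall x th, ex_derive (fun y => dx xi y th) x) /\
    (forall x th, ex_derive (fun t => xi x t) th) /\
    (forall x th, ex_derive (fun t => dth xi x t) th) /\
    (forall x th, inOmegaBar m a b x -> -A <= th <= A ->
       cont2 xi x th /\ cont2 (dx xi) x th /\ cont2 (dth xi) x th /\
       cont2 (dxx xi) x th /\ cont2 (dthth xi) x th) /\
    (forall x th, inOmega m a b x -> -A < th < A ->
       - dxx xi x th - eps ^ 2 * dthth xi x th
       + Lop m a b K (fun y => xi y th) x - Rf x th * xi x th
       = mu * xi x th) /\
    (forall i th, (i < m)%nat -> -A <= th <= A ->
       dx xi (a i) th = 0 /\ dx xi (b i) th = 0) /\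
    (forall x, inOmegaBar m a b x -> dth xi x (-A) = 0 /\ dth xi x A = 0).

Definition R_ok (m : nat) (a b : nat -> R) (A : R) (Rf : R -> R -> R) (CR : R) : Prop :=
  (forall x th, ex_derive (fun y => Rf y th) x) /\
  (forall x th, ex_derive (fun t => Rf x t) th) /\
  (forall x th, inOmegaBar m a b x -> -A <= th <= A ->
     cont2 Rf x th /\ cont2 (dx Rf) x th /\ cont2 (dth Rf) x th) /\
  (forall x th, inOmega m a b x -> -A < th < A ->
     Rabs (Rf x th) < CR /\ Rabs (dx Rf x th) < CR /\ Rabs (dth Rf x th) < CR).

Definition K_ok (m : nat) (a b : nat -> R) (K : R -> R) (cK CK : R) : Prop :=
  (forall z, ex_derive K z) /\
  (forall z, continuous (Derive K) z) /\
  (forall z, K (- z) = K z) /\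
  0 < cK /\
  (forall x y, inOmega m a b x -> inOmega m a b y ->
     cK < K (x - y) < CK /\ Rabs (Derive K (x - y)) < CK).

From Stdlib Require Import Reals Lra Lia.
From Coquelicot Require Import Coquelicot.
Open Scope R_scope.

(** Let [psi] be the principal eigenfunction of the [theta]-problem at some
    [theta'] and [xi] that of the [eps]-problem. Testing the equation of [xi]
    against [psi], integrating by parts in [x] (Neumann conditions) and using the
    symmetry of [L], the weighted mass [h(theta) = int_Omega psi xi(., theta)]
    satisfies
      [eps^2 h'' = (lambda(theta') - mu_eps) h + int_Omega psi xi (R(., theta') - R(., theta))],
    where the last term is at most [C_R |theta' - theta| h] in absolute value.

    Upper bound: with [theta' = theta0], [mu_eps > lambda(theta0) + del] makes
    [h > 0] satisfy [eps^2 h'' <= - (del/2) h] on a window of width [O(eps)]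
    around [theta0], which Sturm comparison with a cosine forbids.

    Lower bound: if [mu_eps < lambda(theta0) - del] then, [theta0] being a
    minimiser of [lambda], [eps^2 h'' >= (del/2) h] near every [theta']. Take
    [theta'] on a fixed finite grid, close to a maximum point [t] of
    [int_Omega xi(., theta)]; the grid eigenfunctions are bounded above and, by a
    Hopf-type argument at the endpoints of [Omega], below by positive constants.
    Then [h] grows by a factor [1 + del d^2 / (4 eps^2)] over a fixed distance
    [d] from [t] (the Neumann condition in [theta] chooses the direction), which
    contradicts the maximality of [t] once [eps] is small. *)

Lemma continuous_epsilon_delta (f : R -> R) (x : R) :
  continuous f x <-> forall eps, 0 < eps -> exists del, 0 < del /\
     forall y, Rabs (y - x) < del -> Rabs (f y - f x) < eps.
Proof.
  split.
  - intros H eps Heps. apply continuity_pt_filterlim in H.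
    destruct (H eps Heps) as [del [Hd Hy]]. exists del; split; auto.
    intros y Hyx. destruct (Req_dec y x) as [->|Hne].
    + rewrite Rminus_diag, Rabs_R0; auto.
    + apply (Hy y). split; [split; [exact I|auto]|exact Hyx].
  - intros H. apply continuity_pt_filterlim. intros eps Heps.
    destruct (H eps Heps) as [del [Hd Hy]]. exists del; split; auto.
    intros y [_ Hyx]. apply Hy. exact Hyx.
Qed.

Lemma continuity_2d_pt_epsilon_delta (f : R -> R -> R) x y :
  continuity_2d_pt f x y <-> forall eps, 0 < eps -> exists del, 0 < del /\
    forall u v, Rabs (u - x) < del -> Rabs (v - y) < del ->
    Rabs (f u v - f x y) < eps.
Proof.
  split.
  - intros H eps Heps. destruct (H (mkposreal eps Heps)) as [d Hd].
    exists d; split; [apply cond_pos|]. intros; apply Hd; auto.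
  - intros H eps. destruct (H eps (cond_pos eps)) as [d [Hd0 Hd]].
    exists (mkposreal d Hd0). intros; apply Hd; auto.
Qed.

Lemma cont2_continuity_2d_pt F x th : cont2 F x th -> continuity_2d_pt F x th.
Proof. apply continuity_2d_pt_filterlim. Qed.

Lemma continuity_2d_pt_swap f x y :
  continuity_2d_pt f x y -> continuity_2d_pt (fun u v => f v u) y x.
Proof.
  rewrite !continuity_2d_pt_epsilon_delta. intros H eps Heps.
  destruct (H eps Heps) as [d [Hd H1]]. exists d; split; auto.
Qed.

Lemma continuity_2d_pt_partial1 f x y :
  continuity_2d_pt f x y -> continuous (fun u => f u y) x.
Proof.
  rewrite continuity_2d_pt_epsilon_delta, continuous_epsilon_delta.
  intros H eps Heps. destruct (H eps Heps) as [d [Hd H1]].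
  exists d; split; auto. intros u Hu. apply H1; auto.
  rewrite Rminus_diag, Rabs_R0; auto.
Qed.

Lemma continuity_2d_pt_partial2 f x y :
  continuity_2d_pt f x y -> continuous (fun v => f x v) y.
Proof.
  intros H. apply (continuity_2d_pt_partial1 (fun u v => f v u)).
  now apply continuity_2d_pt_swap.
Qed.

Lemma continuity_2d_pt_fst (g : R -> R) x y :
  continuous g x -> continuity_2d_pt (fun u v => g u) x y.
Proof.
  intros H. apply (continuity_1d_2d_pt_comp g (fun u v => u)).
  - now apply continuity_pt_filterlim.
  - apply continuity_2d_pt_id1.
Qed.

Lemma continuity_2d_pt_snd (g : R -> R) x y :
  continuous g y -> continuity_2d_pt (fun u v => g v) x y.
Proof.
  intros H. apply (continuity_1d_2d_pt_comp g (fun u v => v)).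
  - now apply continuity_pt_filterlim.
  - apply continuity_2d_pt_id2.
Qed.

Lemma continuity_2d_pt_diff (g : R -> R) x y :
  continuous g (x - y) -> continuity_2d_pt (fun u v => g (u - v)) x y.
Proof.
  intros H. apply (continuity_1d_2d_pt_comp g (fun u v => u - v)).
  - now apply continuity_pt_filterlim.
  - apply continuity_2d_pt_minus; [apply continuity_2d_pt_id1|apply continuity_2d_pt_id2].
Qed.

(** Specialisations to [R] of Coquelicot's generic lemmas, stated with [Rmult] etc.
    so that they apply by higher-order unification. *)

Lemma continuous_Rmult (f g : R -> R) x :
  continuous f x -> continuous g x -> continuous (fun y => f y * g y) x.
Proof. apply (continuous_mult f g). Qed.

Lemma continuous_Rplus (f g : R -> R) x :
  continuous f x -> continuous g x -> continuous (fun y => f y + g y) x.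
Proof. apply (continuous_plus f g). Qed.

Lemma continuous_Rminus (f g : R -> R) x :
  continuous f x -> continuous g x -> continuous (fun y => f y - g y) x.
Proof. apply (continuous_minus f g). Qed.

Lemma continuous_Ropp (f : R -> R) x : continuous f x -> continuous (fun y => - f y) x.
Proof. apply (continuous_opp f). Qed.

Lemma continuous_Rscal (c : R) (f : R -> R) x :
  continuous f x -> continuous (fun y => c * f y) x.
Proof. intros; apply continuous_Rmult; [apply continuous_const|auto]. Qed.

Lemma ex_derive_continuous_R (f : R -> R) x : ex_derive f x -> continuous f x.
Proof. apply (ex_derive_continuous (K:=R_AbsRing) (V:=R_NormedModule)). Qed.

Lemma is_derive_continuous_R (f : R -> R) x l : is_derive f x l -> continuous f x.
Proof. intros H; apply ex_derive_continuous_R; now exists l. Qed.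

Lemma nondecreasing_of_derive_nonneg (f df : R -> R) a b : a <= b ->
  (forall x, a < x < b -> is_derive f x (df x)) ->
  (forall x, a <= x <= b -> continuous f x) ->
  (forall x, a < x < b -> 0 <= df x) -> f a <= f b.
Proof.
  intros Hab Hd Hc Hp.
  destruct (Req_dec a b) as [->|Hne]; [lra|].
  assert (pr1 : forall c, a < c < b -> derivable_pt f c).
  { intros c Hc'. exists (df c). now apply is_derive_Reals, Hd. }
  assert (pr2 : forall c, a < c < b -> derivable_pt id c) by (intros; apply derivable_pt_id).
  destruct (MVT f id a b pr1 pr2) as [c [P HP]]; [lra| | |].
  - intros; now apply continuity_pt_filterlim, Hc.
  - intros c _; apply derivable_continuous_pt, derivable_pt_id.
  - rewrite (derive_pt_eq_0 f c (df c) (pr1 c P)) in HP by now apply is_derive_Reals, Hd.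
    rewrite (derive_pt_eq_0 id c 1 (pr2 c P)) in HP by apply derivable_pt_lim_id.
    unfold id in HP. specialize (Hp c P). nra.
Qed.

Lemma nonincreasing_of_derive_nonpos (f df : R -> R) a b : a <= b ->
  (forall x, a < x < b -> is_derive f x (df x)) ->
  (forall x, a <= x <= b -> continuous f x) ->
  (forall x, a < x < b -> df x <= 0) -> f b <= f a.
Proof.
  intros Hab Hd Hc Hn.
  enough (- f a <= - f b) by lra.
  apply (nondecreasing_of_derive_nonneg (fun x => - f x) (fun x => - df x) a b Hab).
  - intros x Hx. apply (is_derive_opp f); auto.
  - intros x Hx. apply continuous_Ropp; auto.
  - intros x Hx. specialize (Hn x Hx); lra.
Qed.

Lemma continuous_nonneg_of_approach (g : R -> R) p : continuous g p ->
  (forall eta, 0 < eta -> exists x, Rabs (x - p) < eta /\ 0 < g x) -> 0 <= g p.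
Proof.
  intros Hc H. apply Rnot_lt_le; intros Hlt.
  destruct (proj1 (continuous_epsilon_delta g p) Hc (- g p) ltac:(lra)) as [d [Hd Hd']].
  destruct (H d Hd) as [x [Hx Hgx]]. specialize (Hd' x Hx).
  apply Rabs_def2 in Hd'. lra.
Qed.

Lemma continuous_eq_of_approach (g1 g2 : R -> R) p : continuous g1 p -> continuous g2 p ->
  (forall eta, 0 < eta -> exists x, Rabs (x - p) < eta /\ g1 x = g2 x) -> g1 p = g2 p.
Proof.
  intros H1 H2 H.
  assert (Hc : continuous (fun x => g1 x - g2 x) p) by now apply continuous_Rminus.
  destruct (Req_dec (g1 p - g2 p) 0) as [E|E]; [lra|exfalso].
  destruct (proj1 (continuous_epsilon_delta _ p) Hc (Rabs (g1 p - g2 p)))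
    as [d [Hd Hd']]; [now apply Rabs_pos_lt|].
  destruct (H d Hd) as [x [Hx Hg]]. specialize (Hd' x Hx). cbv beta in Hd'.
  rewrite Hg, Rminus_diag, Rminus_0_l, Rabs_Ropp in Hd'. lra.
Qed.

Lemma approach_left_end p q : p < q ->
  forall eta, 0 < eta -> exists x, Rabs (x - p) < eta /\ p < x < q.
Proof.
  intros Hpq eta He. exists (p + Rmin eta (q - p) / 2).
  assert (0 < Rmin eta (q - p)) by (apply Rmin_pos; lra).
  assert (Rmin eta (q - p) <= eta) by apply Rmin_l.
  assert (Rmin eta (q - p) <= q - p) by apply Rmin_r.
  split; [rewrite Rabs_right|]; lra.
Qed.

Lemma approach_right_end p q : p < q ->
  forall eta, 0 < eta -> exists x, Rabs (x - q) < eta /\ p < x < q.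
Proof.
  intros Hpq eta He. exists (q - Rmin eta (q - p) / 2).
  assert (0 < Rmin eta (q - p)) by (apply Rmin_pos; lra).
  assert (Rmin eta (q - p) <= eta) by apply Rmin_l.
  assert (Rmin eta (q - p) <= q - p) by apply Rmin_r.
  split; [rewrite Rabs_left|]; lra.
Qed.

(** [ring] on an equation whose type is a Coquelicot structure convertible to [R]. *)
Ltac ring_R := match goal with |- ?l = ?r => change (@eq R l r); unfold Rminus; ring end.

Definition continuous_within (D : R -> Prop) (F : R -> R) (s0 : R) : Prop :=
  forall eps, 0 < eps -> exists del, 0 < del /\
    forall s, D s -> Rabs (s - s0) < del -> Rabs (F s - F s0) < eps.

Lemma continuous_within_True F s0 :
  continuous_within (fun _ => True) F s0 -> continuous F s0.
Proof.
  intros H. apply continuous_epsilon_delta. intros eps Heps.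
  destruct (H eps Heps) as [d [Hd H1]]. exists d; split; auto.
Qed.

Lemma continuous_within_const D c s0 : continuous_within D (fun _ => c) s0.
Proof.
  intros eps Heps; exists 1; split; [lra|].
  intros; rewrite Rminus_diag, Rabs_R0; auto.
Qed.

Lemma continuous_within_plus D F G s0 : continuous_within D F s0 ->
  continuous_within D G s0 -> continuous_within D (fun s => F s + G s) s0.
Proof.
  intros HF HG eps Heps.
  destruct (HF (eps / 2)) as [d1 [Hd1 H1]]; [lra|].
  destruct (HG (eps / 2)) as [d2 [Hd2 H2]]; [lra|].
  exists (Rmin d1 d2); split; [now apply Rmin_pos|].
  intros s Hs Hss.
  assert (Hs1 := H1 s Hs (Rlt_le_trans _ _ _ Hss (Rmin_l _ _))).
  assert (Hs2 := H2 s Hs (Rlt_le_trans _ _ _ Hss (Rmin_r _ _))).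
  replace (F s + G s - (F s0 + G s0)) with ((F s - F s0) + (G s - G s0)) by ring.
  eapply Rle_lt_trans; [apply Rabs_triang|lra].
Qed.

Lemma continuous_within_ext D (F G : R -> R) s0 :
  (forall s, F s = G s) -> continuous_within D F s0 -> continuous_within D G s0.
Proof.
  intros E H eps He. destruct (H eps He) as [d [Hd H']].
  exists d; split; auto. intros s Hs Hss. rewrite <- !E. auto.
Qed.

(** [clamp A] retracts [R] onto [[-A, A]]; it turns continuity within [[-A, A]]
    into continuity everywhere, as required by the extreme value theorem. *)
Definition clamp (A x : R) : R := Rmax (- A) (Rmin A x).

Lemma clamp_in A x : 0 <= A -> - A <= clamp A x <= A.
Proof. intros H; unfold clamp, Rmax, Rmin; repeat destruct Rle_dec; lra. Qed.

Lemma clamp_id A x : - A <= x <= A -> clamp A x = x.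
Proof. intros H; unfold clamp, Rmax, Rmin; repeat destruct Rle_dec; lra. Qed.

Lemma clamp_lipschitz A x y : Rabs (clamp A y - clamp A x) <= Rabs (y - x).
Proof.
  unfold clamp, Rmax, Rmin; repeat destruct Rle_dec;
  repeat match goal with |- context [Rabs ?z] => destruct (Rcase_abs z) as [?|?];
     [rewrite (Rabs_left z) by lra|rewrite (Rabs_right z) by lra] end; lra.
Qed.

Lemma continuous_clamp_of_within A F : 0 <= A ->
  (forall s0, - A <= s0 <= A -> continuous_within (fun s => - A <= s <= A) F s0) ->
  forall x, continuous (fun s => F (clamp A s)) x.
Proof.
  intros HA H x. apply continuous_epsilon_delta. intros eps Heps.
  destruct (H (clamp A x) (clamp_in A x HA) eps Heps) as [d [Hd Hd']].
  exists d; split; auto. intros y Hy. apply Hd'.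
  - now apply clamp_in.
  - eapply Rle_lt_trans; [apply clamp_lipschitz|auto].
Qed.

(** * Integrals over [Omega] *)

Lemma RInt_param_continuous_within (g : R -> R -> R) (D : R -> Prop) c d s0 :
  c <= d -> (forall y, c <= y <= d -> continuity_2d_pt g s0 y) ->
  (forall s, D s -> ex_RInt (g s) c d) -> D s0 ->
  continuous_within D (fun s => RInt (g s) c d) s0.
Proof.
  intros Hcd Hc Hex HD eps Heps.
  set (e := eps / (d - c + 1)).
  assert (He : 0 < e) by (unfold e; apply Rdiv_lt_0_compat; lra).
  destruct (uniform_continuity_2d_1d' g c d s0 Hc (mkposreal e He)) as [del Hdel].
  exists del; split; [apply cond_pos|]. intros s Hs Hss0.
  apply Rabs_lt_between' in Hss0.
  rewrite <- (RInt_minus (V:=R_CompleteNormedModule)) by auto.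
  eapply Rle_lt_trans.
  - apply (abs_RInt_le_const _ c d e Hcd).
    + apply (ex_RInt_minus (V:=R_CompleteNormedModule)); auto.
    + intros y Hy. left. apply (Hdel y s0 y s); auto; try lra.
      * rewrite Rminus_diag, Rabs_R0; apply cond_pos.
  - assert (e * (d - c + 1) = eps) by (unfold e; field; lra). nra.
Qed.

Lemma RInt_Rminus (f g : R -> R) a b : ex_RInt f a b -> ex_RInt g a b ->
  RInt (fun x => f x - g x) a b = RInt f a b - RInt g a b.
Proof. apply (RInt_minus f g). Qed.

Lemma RInt_Rplus (f g : R -> R) a b : ex_RInt f a b -> ex_RInt g a b ->
  RInt (fun x => f x + g x) a b = RInt f a b + RInt g a b.
Proof. apply (RInt_plus f g). Qed.

Lemma RInt_Rscal (f : R -> R) k a b : ex_RInt f a b ->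
  RInt (fun x => k * f x) a b = k * RInt f a b.
Proof. intros; now apply (RInt_scal f). Qed.

Lemma RInt_Rzero a b : RInt (fun _ => 0) a b = 0.
Proof. rewrite RInt_const. unfold scal; simpl; unfold mult; simpl. ring. Qed.

Lemma ex_RInt_of_continuous_on (f : R -> R) a b : a <= b ->
  (forall x, a <= x <= b -> continuous f x) -> ex_RInt f a b.
Proof.
  intros Hab H; apply (ex_RInt_continuous (V:=R_CompleteNormedModule)).
  rewrite Rmin_left, Rmax_right by lra; auto.
Qed.

Definition continuous_everywhere (f : R -> R) : Prop := forall x, continuous f x.
Definition continuous_everywhere2 (g : R -> R -> R) : Prop :=
  forall x y, continuity_2d_pt g x y.

Definition intervals_proper (m : nat) (a b : nat -> R) : Prop :=
  forall i, (i < m)%nat -> a i < b i.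
Definition ex_intOmega (m : nat) (a b : nat -> R) (f : R -> R) : Prop :=
  forall i, (i < m)%nat -> ex_RInt f (a i) (b i).
Definition continuous_on_bar (m : nat) (a b : nat -> R) (f : R -> R) : Prop :=
  forall i, (i < m)%nat -> forall x, a i <= x <= b i -> continuous f x.

Lemma intervals_ok_proper {m a b} : intervals_ok m a b -> intervals_proper m a b.
Proof. intros [_ [H _]]; exact H. Qed.

Lemma intervals_proper_pred m a b :
  intervals_proper (S m) a b -> intervals_proper m a b.
Proof. intros H i Hi; apply H; lia. Qed.

Lemma ex_intOmega_of_continuous_on_bar m a b f :
  intervals_proper m a b -> continuous_on_bar m a b f -> ex_intOmega m a b f.
Proof. intros Ho Hc i Hi. apply ex_RInt_of_continuous_on; [apply Rlt_le; auto|]. now apply Hc. Qed.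

Lemma continuous_on_bar_everywhere m a b f :
  continuous_everywhere f -> continuous_on_bar m a b f.
Proof. intros H i _ x _; auto. Qed.

Lemma ex_intOmega_of_continuous m a b f :
  intervals_proper m a b -> continuous_everywhere f -> ex_intOmega m a b f.
Proof.
  intros; apply ex_intOmega_of_continuous_on_bar; auto.
  now apply continuous_on_bar_everywhere.
Qed.

Lemma ex_intOmega_scal m a b f k :
  ex_intOmega m a b f -> ex_intOmega m a b (fun x => k * f x).
Proof. intros H i Hi. apply (ex_RInt_scal f), H, Hi. Qed.

Lemma continuous_everywhere_mult f g : continuous_everywhere f -> continuous_everywhere g ->
  continuous_everywhere (fun x => f x * g x).
Proof. intros Hf Hg x; now apply continuous_Rmult. Qed.

Lemma continuous_everywhere_const c : continuous_everywhere (fun _ => c).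
Proof. intros x; apply continuous_const. Qed.

Lemma continuous_on_bar_mult m a b f g : continuous_on_bar m a b f ->
  continuous_on_bar m a b g -> continuous_on_bar m a b (fun x => f x * g x).
Proof. intros Hf Hg i Hi x Hx; apply continuous_Rmult; [apply (Hf i)|apply (Hg i)]; auto. Qed.

Lemma continuous_on_bar_plus m a b f g : continuous_on_bar m a b f ->
  continuous_on_bar m a b g -> continuous_on_bar m a b (fun x => f x + g x).
Proof. intros Hf Hg i Hi x Hx; apply continuous_Rplus; [apply (Hf i)|apply (Hg i)]; auto. Qed.

Lemma continuous_on_bar_minus m a b f g : continuous_on_bar m a b f ->
  continuous_on_bar m a b g -> continuous_on_bar m a b (fun x => f x - g x).
Proof. intros Hf Hg i Hi x Hx; apply continuous_Rminus; [apply (Hf i)|apply (Hg i)]; auto. Qed.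

Lemma continuous_on_bar_opp m a b f :
  continuous_on_bar m a b f -> continuous_on_bar m a b (fun x => - f x).
Proof. intros Hf i Hi x Hx; apply continuous_Ropp; apply (Hf i); auto. Qed.

Lemma continuous_on_bar_const m a b c : continuous_on_bar m a b (fun _ => c).
Proof. intros i Hi x Hx; apply continuous_const. Qed.

Ltac continuity_on_bar :=
  repeat first [ assumption | apply continuous_on_bar_everywhere; assumption
               | apply continuous_on_bar_const
               | apply continuous_on_bar_mult | apply continuous_on_bar_plus
               | apply continuous_on_bar_minus | apply continuous_on_bar_opp ].

Ltac integrable_on_Omega :=
  apply ex_intOmega_of_continuous_on_bar; [assumption|continuity_on_bar].

Lemma intOmega_continuous_within m a b (g : R -> R -> R) D s0 :
  intervals_proper m a b -> D s0 ->
  (forall i, (i < m)%nat -> forall y, a i <= y <= b i -> continuity_2d_pt g s0 y) ->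
  (forall s, D s -> ex_intOmega m a b (g s)) ->
  continuous_within D (fun s => intOmega m a b (g s)) s0.
Proof.
  intros Ho HD Hc Hie. induction m as [|k IH]; simpl.
  - apply continuous_within_const.
  - apply continuous_within_plus.
    + apply IH; [now apply intervals_proper_pred| |].
      * intros i Hi y Hy; apply (Hc i); auto; lia.
      * intros s Hs i Hi; apply (Hie s Hs i); lia.
    + apply RInt_param_continuous_within; auto.
      * apply Rlt_le, Ho; lia.
      * intros y Hy; apply (Hc k); auto.
      * intros s Hs; apply (Hie s Hs k); auto.
Qed.

Lemma intOmega_param_continuous m a b g : intervals_proper m a b ->
  continuous_everywhere2 g -> continuous_everywhere (fun x => intOmega m a b (g x)).
Proof.
  intros Ho Hg x. apply continuous_within_True, intOmega_continuous_within; auto.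
  intros s _ i Hi. apply ex_RInt_of_continuous_on; [apply Rlt_le; auto|].
  intros y _. apply (continuity_2d_pt_partial2 g s y); auto.
Qed.

Lemma RInt_param_continuous g c d : continuous_everywhere2 g ->
  continuous_everywhere (fun x => RInt (g x) c d).
Proof.
  intros Hg x.
  assert (Hex : forall s p q, ex_RInt (g s) p q).
  { intros s p q. apply (ex_RInt_continuous (V:=R_CompleteNormedModule)).
    intros y _; apply (continuity_2d_pt_partial2 g s y), Hg. }
  destruct (Rle_lt_dec c d) as [Hcd|Hcd].
  - apply continuous_within_True, RInt_param_continuous_within; auto.
  - apply (continuous_ext (fun y => - RInt (g y) d c)).
    + intros z. rewrite <- (opp_RInt_swap (V:=R_CompleteNormedModule)) by auto.
      apply Ropp_involutive.
    + apply continuous_Ropp, continuous_within_True, RInt_param_continuous_within;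
        auto; lra.
Qed.

Lemma continuous_everywhere2_swap g :
  continuous_everywhere2 g -> continuous_everywhere2 (fun u v => g v u).
Proof. intros H x y; now apply continuity_2d_pt_swap. Qed.

Lemma intOmega_plus m a b f g : ex_intOmega m a b f -> ex_intOmega m a b g ->
  intOmega m a b (fun x => f x + g x) = intOmega m a b f + intOmega m a b g.
Proof.
  intros Hf Hg; induction m as [|k IH]; simpl; [ring|].
  rewrite IH, RInt_Rplus by (try intros ? ?; first [apply Hf|apply Hg]; lia). ring.
Qed.

Lemma intOmega_minus m a b f g : ex_intOmega m a b f -> ex_intOmega m a b g ->
  intOmega m a b (fun x => f x - g x) = intOmega m a b f - intOmega m a b g.
Proof.
  intros Hf Hg; induction m as [|k IH]; simpl; [ring|].
  rewrite IH, RInt_Rminus by (try intros ? ?; first [apply Hf|apply Hg]; lia). ring.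
Qed.

Lemma intOmega_scal m a b f k : ex_intOmega m a b f ->
  intOmega m a b (fun x => k * f x) = k * intOmega m a b f.
Proof.
  intros Hf; induction m as [|j IH]; simpl; [ring|].
  rewrite IH, RInt_Rscal by (try intros ? ?; apply Hf; lia). ring.
Qed.

Lemma intOmega_ext m a b f g : intervals_proper m a b ->
  (forall i, (i < m)%nat -> forall x, a i < x < b i -> f x = g x) ->
  intOmega m a b f = intOmega m a b g.
Proof.
  intros Ho H; induction m as [|k IH]; simpl; [ring|].
  rewrite IH; [| now apply intervals_proper_pred | intros i Hi; apply (H i); lia].
  f_equal. apply RInt_ext. rewrite Rmin_left, Rmax_right by (apply Rlt_le, Ho; lia).
  intros; apply (H k); auto.
Qed.

Lemma intOmega_zero m a b : intOmega m a b (fun _ => 0) = 0.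
Proof. induction m; simpl; [ring|]. rewrite IHm, RInt_Rzero; ring. Qed.

Lemma intOmega_le m a b f g : intervals_proper m a b ->
  ex_intOmega m a b f -> ex_intOmega m a b g ->
  (forall i, (i < m)%nat -> forall x, a i < x < b i -> f x <= g x) ->
  intOmega m a b f <= intOmega m a b g.
Proof.
  intros Ho Hf Hg H; induction m as [|k IH]; simpl; [lra|].
  apply Rplus_le_compat.
  - apply IH; intros i Hi; [apply Ho|apply Hf|apply Hg|apply (H i)]; lia.
  - apply RInt_le; auto. apply Rlt_le, Ho; lia. intros; apply (H k); auto.
Qed.

Lemma intOmega_nonneg m a b f : intervals_proper m a b -> ex_intOmega m a b f ->
  (forall i, (i < m)%nat -> forall x, a i < x < b i -> 0 <= f x) ->
  0 <= intOmega m a b f.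
Proof.
  intros Ho Hf H. rewrite <- (intOmega_zero m a b).
  apply intOmega_le; auto. intros i _; apply ex_RInt_const.
Qed.

Lemma intOmega_pos m a b f : (1 <= m)%nat -> intervals_proper m a b ->
  continuous_on_bar m a b f ->
  (forall i, (i < m)%nat -> forall x, a i < x < b i -> 0 < f x) ->
  0 < intOmega m a b f.
Proof.
  intros Hm Ho Hc H. destruct m as [|k]; [lia|]. simpl.
  apply Rplus_le_lt_0_compat.
  - apply intOmega_nonneg; [now apply intervals_proper_pred| |].
    + apply ex_intOmega_of_continuous_on_bar; [now apply intervals_proper_pred|].
      intros i Hi; apply Hc; lia.
    + intros i Hi x Hx. apply Rlt_le, (H i); auto.
  - apply RInt_gt_0; auto. intros; apply (H k); auto. intros; apply (Hc k); auto.
Qed.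

Lemma intOmega_abs_le m a b f g : intervals_proper m a b ->
  ex_intOmega m a b f -> ex_intOmega m a b g ->
  (forall i, (i < m)%nat -> forall x, a i < x < b i -> Rabs (f x) <= g x) ->
  Rabs (intOmega m a b f) <= intOmega m a b g.
Proof.
  intros Ho Hf Hg H. apply Rabs_le. split.
  - replace (- intOmega m a b g) with (-1 * intOmega m a b g) by ring.
    rewrite <- intOmega_scal by auto.
    apply intOmega_le; auto using ex_intOmega_scal.
    intros i Hi x Hx. specialize (H i Hi x Hx). apply Rabs_le_between in H. lra.
  - apply intOmega_le; auto.
    intros i Hi x Hx. specialize (H i Hi x Hx). apply Rabs_le_between in H. lra.
Qed.

Lemma ex_RInt_of_continuous_everywhere (f : R -> R) p q :
  continuous_everywhere f -> ex_RInt f p q.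
Proof. intros H; apply (ex_RInt_continuous (V:=R_CompleteNormedModule)); intros; apply H. Qed.

Lemma is_derive_RInt_upper (f : R -> R) p s :
  continuous_everywhere f -> is_derive (fun u => RInt f p u) s (f s).
Proof.
  intros Hf. apply (is_derive_RInt f (fun u => RInt f p u) p s); [|apply Hf].
  apply filter_forall. intros u. apply (RInt_correct (V:=R_CompleteNormedModule)).
  now apply ex_RInt_of_continuous_everywhere.
Qed.

(** Fubini for continuous integrands: both iterated integrals over [[a, s]] have
    the same derivative in [s] and vanish at [s = a]. *)
Lemma RInt_RInt_swap g a b c d : continuous_everywhere2 g ->
  RInt (fun x => RInt (fun y => g x y) c d) a b =
  RInt (fun y => RInt (fun x => g x y) a b) c d.
Proof.
  intros Hg.
  set (Phi := fun x => RInt (fun y => g x y) c d).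
  assert (HPhi : continuous_everywhere Phi) by now apply RInt_param_continuous.
  assert (Hgx : forall t, continuous_everywhere (fun x => g x t))
    by (intros t x; apply (continuity_2d_pt_partial1 g x t), Hg).
  set (P := fun s => RInt Phi a s).
  set (Q := fun s => RInt (fun y => RInt (fun x => g x y) a s) c d).
  assert (HP : forall s, is_derive P s (Phi s)) by (intros; now apply is_derive_RInt_upper).
  assert (HQ : forall s, is_derive Q s (Phi s)).
  { intros s.
    replace (Phi s) with (RInt (fun t => Derive (fun u => RInt (fun x => g x t) a u) s) c d).
    2: { apply RInt_ext. intros t _. apply is_derive_unique, (is_derive_RInt_upper (fun x => g x t)), Hgx. }
    apply (is_derive_RInt_param (fun u t => RInt (fun x => g x t) a u) c d s).
    - apply filter_forall. intros x0 t _. eexists.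
      apply (is_derive_RInt_upper (fun x => g x t)), Hgx.
    - intros t _. apply (continuity_2d_pt_ext g); [|apply Hg].
      intros u v. symmetry. apply is_derive_unique, (is_derive_RInt_upper (fun x => g x v)), Hgx.
    - apply filter_forall. intros y. apply ex_RInt_of_continuous_everywhere.
      apply (RInt_param_continuous (fun u v => g v u)), continuous_everywhere2_swap, Hg. }
  assert (HPQ : forall s, is_derive (fun s => P s - Q s) s 0).
  { intros s. replace 0 with (Phi s - Phi s) by ring. now apply (is_derive_minus P Q). }
  destruct (MVT_gen (fun s => P s - Q s) a b (fun _ => 0)) as [c0 [_ Hc0]].
  - intros; apply HPQ.
  - intros x _. apply continuity_pt_filterlim, (is_derive_continuous_R (fun s => P s - Q s) x 0), HPQ.
  - assert (P a = 0) by apply (RInt_point (V:=R_CompleteNormedModule)).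
    assert (Q a = 0).
    { unfold Q. rewrite <- (RInt_Rzero c d). apply RInt_ext.
      intros; apply (RInt_point (V:=R_CompleteNormedModule)). }
    unfold P, Q in *. lra.
Qed.

Lemma intOmega_RInt_swap m a b g c d : intervals_proper m a b -> continuous_everywhere2 g ->
  intOmega m a b (fun x => RInt (fun y => g x y) c d) =
  RInt (fun y => intOmega m a b (fun x => g x y)) c d.
Proof.
  intros Ho Hg. induction m as [|k IH]; simpl.
  - symmetry; apply RInt_Rzero.
  - rewrite IH, RInt_RInt_swap by (auto; now apply intervals_proper_pred).
    rewrite RInt_Rplus; auto; apply ex_RInt_of_continuous_everywhere.
    + apply (intOmega_param_continuous k a b (fun y x => g x y)).
      * now apply intervals_proper_pred.
      * now apply continuous_everywhere2_swap.
    + now apply (RInt_param_continuous (fun y x => g x y)), continuous_everywhere2_swap.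
Qed.

Lemma intOmega_swap m a b n a' b' g :
  intervals_proper m a b -> intervals_proper n a' b' -> continuous_everywhere2 g ->
  intOmega m a b (fun x => intOmega n a' b' (fun y => g x y)) =
  intOmega n a' b' (fun y => intOmega m a b (fun x => g x y)).
Proof.
  intros Ho Ho' Hg. induction n as [|k IH]; simpl.
  - apply intOmega_zero.
  - rewrite intOmega_plus.
    + rewrite IH by now apply intervals_proper_pred.
      now rewrite intOmega_RInt_swap.
    + apply ex_intOmega_of_continuous, (intOmega_param_continuous k a' b' g); auto.
      now apply intervals_proper_pred.
    + now apply ex_intOmega_of_continuous, RInt_param_continuous.
Qed.

(** * The nonlocal operator [L] *)

Lemma Lop_integrand_continuous (f K : R -> R) :
  continuous_everywhere f -> continuous_everywhere K ->
  continuous_everywhere2 (fun x y => (f x - f y) * K (x - y)).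
Proof.
  intros Hf HK x y. apply continuity_2d_pt_mult.
  - apply continuity_2d_pt_minus;
      [apply continuity_2d_pt_fst|apply continuity_2d_pt_snd]; auto.
  - now apply continuity_2d_pt_diff.
Qed.

Lemma Lop_continuous m a b K f : intervals_proper m a b ->
  continuous_everywhere f -> continuous_everywhere K ->
  continuous_everywhere (Lop m a b K f).
Proof.
  intros Ho Hf HK. apply (intOmega_param_continuous m a b (fun x y => (f x - f y) * K (x - y))); auto.
  now apply Lop_integrand_continuous.
Qed.

Lemma Lop_symmetric m a b K psi f : intervals_proper m a b ->
  continuous_everywhere psi -> continuous_everywhere f -> continuous_everywhere K ->
  (forall z, K (- z) = K z) ->
  intOmega m a b (fun x => psi x * Lop m a b K f x) =
  intOmega m a b (fun x => f x * Lop m a b K psi x).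
Proof.
  intros Ho Hp Hf HK Hev.
  set (G := fun x y => f x * psi y * K (x - y)).
  assert (HG : continuous_everywhere2 G).
  { intros x y. unfold G. repeat apply continuity_2d_pt_mult.
    - now apply continuity_2d_pt_fst.
    - now apply continuity_2d_pt_snd.
    - now apply continuity_2d_pt_diff. }
  assert (HG' := continuous_everywhere2_swap G HG).
  assert (Hpt : forall i, (i < m)%nat -> forall x, a i < x < b i ->
     psi x * Lop m a b K f x - f x * Lop m a b K psi x =
     intOmega m a b (fun y => G x y) - intOmega m a b (fun y => G y x)).
  { intros i Hi x Hx. unfold Lop.
    assert (HL : forall h, continuous_everywhere h ->
              ex_intOmega m a b (fun y => (h x - h y) * K (x - y))).
    { intros h Hh. apply ex_intOmega_of_continuous; auto. intros y.
      apply (continuity_2d_pt_partial2 (fun x y => (h x - h y) * K (x - y)) x y).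
      now apply Lop_integrand_continuous. }
    assert (HGx : ex_intOmega m a b (G x)).
    { apply ex_intOmega_of_continuous; auto. intros y. now apply continuity_2d_pt_partial2. }
    assert (HGx' : ex_intOmega m a b (fun y => G y x)).
    { apply ex_intOmega_of_continuous; auto. intros y. now apply (continuity_2d_pt_partial1 G). }
    rewrite <- !intOmega_scal, <- !intOmega_minus by (auto using ex_intOmega_scal).
    apply intOmega_ext; auto. intros j Hj y _. unfold G.
    replace (y - x) with (- (x - y)) by ring. rewrite Hev. ring. }
  apply Rminus_diag_uniq.
  rewrite <- intOmega_minus, (intOmega_ext m a b _ _ Ho Hpt), intOmega_minus.
  - rewrite (intOmega_swap m a b m a b (fun x y => G y x)); auto. ring.
  - apply ex_intOmega_of_continuous; auto. now apply intOmega_param_continuous.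
  - apply ex_intOmega_of_continuous; auto. now apply (intOmega_param_continuous m a b (fun x y => G y x)).
  - apply ex_intOmega_of_continuous, continuous_everywhere_mult; auto. now apply Lop_continuous.
  - apply ex_intOmega_of_continuous, continuous_everywhere_mult; auto. now apply Lop_continuous.
Qed.

Lemma Lop_at_zero m a b K f p : intervals_proper m a b ->
  continuous_everywhere f -> continuous_everywhere (fun y => K (p - y)) -> f p = 0 ->
  Lop m a b K f p = - intOmega m a b (fun y => f y * K (p - y)).
Proof.
  intros Ho Hf HK H0. unfold Lop.
  replace (- intOmega m a b (fun y => f y * K (p - y)))
    with (-1 * intOmega m a b (fun y => f y * K (p - y))) by ring.
  rewrite <- intOmega_scal.
  - apply intOmega_ext; auto. intros; rewrite H0; ring.
  - now apply ex_intOmega_of_continuous, continuous_everywhere_mult.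
Qed.

Lemma RInt_by_parts_Neumann (psi f : R -> R) p q : p <= q ->
  (forall x, ex_derive psi x) -> (forall x, ex_derive (Derive psi) x) ->
  (forall x, ex_derive f x) -> (forall x, ex_derive (Derive f) x) ->
  (forall x, p <= x <= q -> continuous (Derive (Derive psi)) x) ->
  (forall x, p <= x <= q -> continuous (Derive (Derive f)) x) ->
  Derive psi p = 0 -> Derive psi q = 0 -> Derive f p = 0 -> Derive f q = 0 ->
  RInt (fun x => psi x * (- Derive (Derive f) x)) p q =
  RInt (fun x => (- Derive (Derive psi) x) * f x) p q.
Proof.
  intros Hpq H1 H2 H3 H4 C1 C2 E1 E2 E3 E4.
  set (W := fun x => Derive psi x * f x - psi x * Derive f x).
  set (dW := fun x => Derive (Derive psi) x * f x - psi x * Derive (Derive f) x).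
  assert (HW : forall x, is_derive W x (dW x)).
  { intros x. unfold W, dW. auto_derive; [repeat split; auto|].
    change (fun x0 : R => f x0) with f; change (fun x0 : R => psi x0) with psi;
    change (fun x0 : R => Derive psi x0) with (Derive psi);
    change (fun x0 : R => Derive f x0) with (Derive f). ring. }
  assert (HI : is_RInt dW p q (minus (W q) (W p))).
  { apply (is_RInt_derive (V:=R_CompleteNormedModule)); [intros; apply HW|].
    rewrite Rmin_left, Rmax_right by lra. intros x Hx. unfold dW.
    apply continuous_Rminus; apply continuous_Rmult; auto; now apply ex_derive_continuous_R. }
  assert (HW0 : minus (W q) (W p) = 0).
  { unfold W, minus, plus, opp; simpl. rewrite E1, E2, E3, E4. ring. }
  rewrite HW0 in HI.
  apply Rminus_diag_uniq. rewrite <- RInt_Rminus.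
  - rewrite (RInt_ext _ dW); [now apply (is_RInt_unique (V:=R_CompleteNormedModule))|].
    intros x _. unfold dW. ring_R.
  - apply ex_RInt_of_continuous_on; auto. intros x Hx.
    apply continuous_Rmult; [now apply ex_derive_continuous_R|now apply continuous_Ropp, C2].
  - apply ex_RInt_of_continuous_on; auto. intros x Hx.
    apply continuous_Rmult; [now apply continuous_Ropp, C1|now apply ex_derive_continuous_R].
Qed.

Lemma intOmega_by_parts_Neumann m a b (psi f : R -> R) : intervals_proper m a b ->
  (forall x, ex_derive psi x) -> (forall x, ex_derive (Derive psi) x) ->
  (forall x, ex_derive f x) -> (forall x, ex_derive (Derive f) x) ->
  continuous_on_bar m a b (Derive (Derive psi)) ->
  continuous_on_bar m a b (Derive (Derive f)) ->
  (forall i, (i < m)%nat -> Derive psi (a i) = 0 /\ Derive psi (b i) = 0) ->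
  (forall i, (i < m)%nat -> Derive f (a i) = 0 /\ Derive f (b i) = 0) ->
  intOmega m a b (fun x => psi x * (- Derive (Derive f) x)) =
  intOmega m a b (fun x => (- Derive (Derive psi) x) * f x).
Proof.
  intros Ho H1 H2 H3 H4 Cp Cf Np Nf. induction m as [|k IH]; simpl; [reflexivity|].
  rewrite IH; [f_equal| |intros i Hi; apply Cp; lia|intros i Hi; apply Cf; lia
              |intros i Hi; apply Np; lia|intros i Hi; apply Nf; lia].
  - destruct (Np k) as [? ?], (Nf k) as [? ?]; try lia.
    apply RInt_by_parts_Neumann; auto; [apply Rlt_le, Ho; lia|apply Cp; lia|apply Cf; lia].
  - now apply intervals_proper_pred.
Qed.

Lemma is_derive_intOmega_param m a b (G : R -> R -> R) th : intervals_proper m a b ->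
  (forall t x, ex_derive (fun u => G u x) t) ->
  (forall i, (i < m)%nat -> forall x, a i <= x <= b i ->
     continuity_2d_pt (fun u v => Derive (fun z => G z v) u) th x) ->
  locally th (fun t => ex_intOmega m a b (G t)) ->
  is_derive (fun t => intOmega m a b (G t)) th
            (intOmega m a b (fun x => Derive (fun u => G u x) th)).
Proof.
  intros Ho Hd Hc Hl. induction m as [|k IH]; simpl.
  - apply (is_derive_const (K:=R_AbsRing) (V:=R_NormedModule) 0).
  - assert (Hk : a k < b k) by (apply Ho; lia).
    apply (is_derive_plus (K:=R_AbsRing) (V:=R_NormedModule)).
    + apply IH; [now apply intervals_proper_pred|intros i Hi; apply Hc; lia|].
      eapply filter_imp; [|apply Hl]. intros t H i Hi; apply H; lia.
    + apply (is_derive_RInt_param G (a k) (b k) th).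
      * apply filter_forall. intros; apply Hd.
      * rewrite Rmin_left, Rmax_right by lra. intros; apply (Hc k); auto.
      * eapply filter_imp; [|apply Hl]. intros t H; apply H; lia.
Qed.

(** The bodies of [is_principal_eig1 _ _ _ _ _ _ (fun _ => 0)] and
    [is_principal_eig2] with the eigenfunction as a parameter: destructing the
    existentials yields these predicates by conversion. *)
Definition principal_eigfun1 (m : nat) (a b : nat -> R) (K : R -> R)
  (Rf : R -> R -> R) (th : R) (lam : R) (psi : R -> R) : Prop :=
    (forall x, inOmega m a b x -> 0 < psi x) /\
    (forall x, ex_derive psi x) /\
    (forall x, ex_derive (Derive psi) x) /\
    (forall x, inOmegaBar m a b x ->
       continuous psi x /\ continuous (Derive psi) x /\
       continuous (Derive_n psi 2) x) /\
    (forall x, inOmega m a b x ->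
       - Derive_n psi 2 x + Lop m a b K psi x - (Rf x th - 0) * psi x = lam * psi x) /\
    (forall i, (i < m)%nat -> Derive psi (a i) = 0 /\ Derive psi (b i) = 0).

Definition principal_eigfun2 (m : nat) (a b : nat -> R) (A : R) (K : R -> R)
  (Rf : R -> R -> R) (eps : R) (mu : R) (xi : R -> R -> R) : Prop :=
    (forall x th, inOmega m a b x -> -A < th < A -> 0 < xi x th) /\
    (forall x th, ex_derive (fun y => xi y th) x) /\
    (forall x th, ex_derive (fun y => dx xi y th) x) /\
    (forall x th, ex_derive (fun t => xi x t) th) /\
    (forall x th, ex_derive (fun t => dth xi x t) th) /\
    (forall x th, inOmegaBar m a b x -> -A <= th <= A ->
       cont2 xi x th /\ cont2 (dx xi) x th /\ cont2 (dth xi) x th /\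
       cont2 (dxx xi) x th /\ cont2 (dthth xi) x th) /\
    (forall x th, inOmega m a b x -> -A < th < A ->
       - dxx xi x th - eps ^ 2 * dthth xi x th
       + Lop m a b K (fun y => xi y th) x - Rf x th * xi x th
       = mu * xi x th) /\
    (forall i th, (i < m)%nat -> -A <= th <= A ->
       dx xi (a i) th = 0 /\ dx xi (b i) th = 0) /\
    (forall x, inOmegaBar m a b x -> dth xi x (-A) = 0 /\ dth xi x A = 0).

Lemma inOmegaBar_of m a b i x : (i < m)%nat -> a i <= x <= b i -> inOmegaBar m a b x.
Proof. intros; exists i; auto. Qed.

Lemma inOmega_of m a b i x : (i < m)%nat -> a i < x < b i -> inOmega m a b x.
Proof. intros; exists i; auto. Qed.

Lemma K_continuous {m a b K cK CK} : K_ok m a b K cK CK -> continuous_everywhere K.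
Proof. intros [HK _] z; now apply ex_derive_continuous_R. Qed.

Lemma R_continuous_on_bar {m a b A Rf CR th} : R_ok m a b A Rf CR -> -A <= th <= A ->
  continuous_on_bar m a b (fun x => Rf x th).
Proof.
  intros [_ [_ [HR _]]] Hth i Hi x Hx.
  apply (continuity_2d_pt_partial1 Rf x th), cont2_continuity_2d_pt.
  apply (HR x th (inOmegaBar_of m a b i x Hi Hx) Hth).
Qed.

Lemma R_lipschitz_theta {m a b A Rf CR x th1 th2} : R_ok m a b A Rf CR -> inOmega m a b x ->
  -A < th1 < A -> -A < th2 < A -> Rabs (Rf x th1 - Rf x th2) <= CR * Rabs (th1 - th2).
Proof.
  intros [_ [R2 [_ R4]]] Hx H1 H2.
  destruct (MVT_gen (fun t => Rf x t) th2 th1 (fun t => dth Rf x t)) as [c [Hc Hc']].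
  - intros y Hy. apply Derive_correct, R2.
  - intros y Hy. apply continuity_pt_filterlim, ex_derive_continuous_R, R2.
  - rewrite Hc', Rabs_mult. apply Rmult_le_compat_r; [apply Rabs_pos|].
    assert (-A < c < A).
    { destruct Hc as [Hc1 Hc2]. split.
      - eapply Rlt_le_trans; [|apply Hc1]. apply Rmin_glb_lt; lra.
      - eapply Rle_lt_trans; [apply Hc2|]. apply Rmax_lub_lt; lra. }
    destruct (R4 x c Hx H) as [_ [_ Hd]]. lra.
Qed.

Lemma K_ge_on_closure m a b K cK CK p y : K_ok m a b K cK CK ->
  (forall eta, 0 < eta -> exists x, Rabs (x - p) < eta /\ inOmega m a b x) ->
  inOmega m a b y -> cK <= K (p - y).
Proof.
  intros HK Happ Hy.
  enough (0 <= K (p - y) - cK) by lra.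
  apply (continuous_nonneg_of_approach (fun x => K (x - y) - cK)).
  - apply continuous_Rminus; [|apply continuous_const].
    apply (continuity_2d_pt_partial1 (fun x y => K (x - y)) p y).
    now apply continuity_2d_pt_diff, (K_continuous HK).
  - intros eta He. destruct (Happ eta He) as [x [Hx Hin]]. exists x; split; auto.
    destruct HK as [_ [_ [_ [_ HKb]]]]. destruct (HKb x y Hin Hy) as [[Hk _] _]. lra.
Qed.

Lemma nonpos_near_of_concave_zero (f : R -> R) p :
  (forall x, ex_derive f x) -> (forall x, ex_derive (Derive f) x) ->
  continuous (Derive_n f 2) p -> f p = 0 -> Derive f p = 0 -> Derive_n f 2 p < 0 ->
  exists d, 0 < d /\ forall y, Rabs (y - p) < d -> f y <= 0.
Proof.
  intros H1 H2 Hc E0 E1 Hneg.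
  destruct (proj1 (continuous_epsilon_delta _ p) Hc (- Derive_n f 2 p) ltac:(lra))
    as [d [Hd Hd']].
  assert (Hf2 : forall z, Rabs (z - p) < d -> Derive_n f 2 z <= 0).
  { intros z Hz. specialize (Hd' z Hz). apply Rabs_def2 in Hd'. lra. }
  assert (Cf : forall z, continuous f z) by (intros; now apply ex_derive_continuous_R).
  assert (Cf' : forall z, continuous (Derive f) z) by (intros; now apply ex_derive_continuous_R).
  exists d; split; auto. intros y Hy. apply Rabs_lt_between' in Hy.
  assert (Hin : forall z, Rmin y p <= z <= Rmax y p -> Rabs (z - p) < d).
  { intros z Hz. apply Rabs_lt_between'.
    unfold Rmin, Rmax in Hz; destruct Rle_dec; lra. }
  destruct (Rle_lt_dec p y) as [Hpy|Hyp].
  - rewrite <- E0. apply (nonincreasing_of_derive_nonpos f (Derive f)); auto.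
    + intros; now apply Derive_correct.
    + intros z Hz. rewrite <- E1.
      apply (nonincreasing_of_derive_nonpos (Derive f) (Derive (Derive f))); try lra.
      * intros; now apply Derive_correct.
      * auto.
      * intros w Hw. apply Hf2, Hin. rewrite Rmin_right, Rmax_left; lra.
  - rewrite <- E0. apply (nondecreasing_of_derive_nonneg f (Derive f)); [lra| | |].
    + intros; now apply Derive_correct.
    + auto.
    + intros z Hz. rewrite <- E1.
      apply (nonincreasing_of_derive_nonpos (Derive f) (Derive (Derive f))); try lra.
      * intros; now apply Derive_correct.
      * auto.
      * intros w Hw. apply Hf2, Hin. rewrite Rmin_left, Rmax_right; lra.
Qed.

Lemma uniform_positive_bounds (N : nat) (P : nat -> R -> R -> Prop) :
  (forall j c C c' C', c' <= c -> C <= C' -> P j c C -> P j c' C') ->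
  (forall j, (j < N)%nat -> exists c C, 0 < c /\ P j c C) ->
  exists c C, 0 < c /\ forall j, (j < N)%nat -> P j c C.
Proof.
  intros Hmono. induction N as [|N IH]; intros H.
  - exists 1, 1; split; [lra|]. intros; lia.
  - destruct IH as [c [C [Hc HcC]]]; [intros j Hj; apply H; lia|].
    destruct (H N ltac:(lia)) as [c' [C' [Hc' HN]]].
    exists (Rmin c c'), (Rmax C C'). split; [now apply Rmin_pos|].
    intros j Hj. destruct (Nat.eq_dec j N) as [->|Hne].
    + apply (Hmono N c' C'); auto using Rmin_r, Rmax_r.
    + apply (Hmono j c C); auto using Rmin_l, Rmax_l. apply HcC; lia.
Qed.

Section PrincipalEigenfunction1.

Variables (m : nat) (a b : nat -> R) (A : R) (K : R -> R) (Rf : R -> R -> R)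
  (CR cK CK th lam : R) (psi : R -> R).
Hypothesis Hint : intervals_ok m a b.
Hypothesis HK : K_ok m a b K cK CK.
Hypothesis HR : R_ok m a b A Rf CR.
Hypothesis Hth : -A <= th <= A.
Hypothesis Hpsi : principal_eigfun1 m a b K Rf th lam psi.

Lemma eigfun1_continuous : continuous_everywhere psi.
Proof. destruct Hpsi as [_ [H _]]. intros z; now apply ex_derive_continuous_R. Qed.

Lemma eigfun1_equation_on_closure p : inOmegaBar m a b p ->
  (forall eta, 0 < eta -> exists x, Rabs (x - p) < eta /\ inOmega m a b x) ->
  Derive_n psi 2 p = Lop m a b K psi p - (Rf p th - 0) * psi p - lam * psi p.
Proof.
  intros Hp Happ. destruct Hpsi as [_ [_ [_ [P4 [P5 _]]]]].
  apply (continuous_eq_of_approach (Derive_n psi 2)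
    (fun x => Lop m a b K psi x - (Rf x th - 0) * psi x - lam * psi x)).
  - apply (P4 p Hp).
  - assert (Cpsi := eigfun1_continuous). destruct Hp as [i [Hi Hp]].
    apply continuous_Rminus; [apply continuous_Rminus|apply continuous_Rscal, Cpsi].
    + apply Lop_continuous; auto; [apply (intervals_ok_proper Hint)|apply (K_continuous HK)].
    + apply continuous_Rmult; [|apply Cpsi].
      apply continuous_Rminus; [now apply (R_continuous_on_bar HR Hth i)|apply continuous_const].
  - intros eta He. destruct (Happ eta He) as [x [Hx Hin]]. exists x; split; auto.
    specialize (P5 x Hin). lra.
Qed.

(** At a boundary zero of [psi] the eigen-equation gives
    [psi'' = L psi = - int psi K < 0]. *)
Lemma eigfun1_second_derivative_neg p : inOmegaBar m a b p ->
  (forall eta, 0 < eta -> exists x, Rabs (x - p) < eta /\ inOmega m a b x) ->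
  psi p = 0 -> Derive_n psi 2 p < 0.
Proof.
  intros Hp Happ H0.
  assert (Ho := intervals_ok_proper Hint). assert (CK' := K_continuous HK).
  assert (CKp : continuous_everywhere (fun y => K (p - y))).
  { intros y. apply (continuity_2d_pt_partial2 (fun x y => K (x - y)) p y).
    now apply continuity_2d_pt_diff. }
  assert (Cpsi := eigfun1_continuous).
  rewrite (eigfun1_equation_on_closure p Hp Happ), (Lop_at_zero m a b K psi p Ho Cpsi CKp H0), H0.
  enough (0 < intOmega m a b (fun y => psi y * K (p - y))) by lra.
  apply intOmega_pos; [apply Hint|auto| |].
  - now apply continuous_on_bar_everywhere, continuous_everywhere_mult, CKp.
  - intros i Hi y Hy. assert (Hy' := inOmega_of m a b i y Hi Hy).
    apply Rmult_lt_0_compat; [now apply Hpsi|].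
    destruct HK as [_ [_ [_ [HcK _]]]].
    enough (cK <= K (p - y)) by lra. now apply (K_ge_on_closure m a b K cK CK).
Qed.

(** Hopf-type boundary positivity: a zero of [psi] at an endpoint, where
    [psi' = 0], would have [psi'' < 0] and make [psi] nonpositive nearby. *)
Lemma eigfun1_pos_at_end p : inOmegaBar m a b p -> Derive psi p = 0 ->
  (forall eta, 0 < eta -> exists x, Rabs (x - p) < eta /\ inOmega m a b x) ->
  0 < psi p.
Proof.
  intros Hp Hd Happ. destruct Hpsi as [P1 [P2 [P3 [P4 _]]]].
  destruct (continuous_nonneg_of_approach psi p (eigfun1_continuous p)) as [Hgt|Heq]; auto.
  { intros eta He. destruct (Happ eta He) as [x [Hx Hin]]. exists x; split; auto. }
  symmetry in Heq.
  destruct (nonpos_near_of_concave_zero psi p P2 P3 (proj2 (proj2 (P4 p Hp))) Heq Hd)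
    as [d [Hd0 Hle]]; [now apply eigfun1_second_derivative_neg|].
  destruct (Happ d Hd0) as [x [Hx Hin]].
  specialize (Hle x Hx). specialize (P1 x Hin). lra.
Qed.

Lemma eigfun1_pos_on_bar i x : (i < m)%nat -> a i <= x <= b i -> 0 < psi x.
Proof.
  intros Hi Hx. destruct Hpsi as [P1 [_ [_ [_ [_ P6]]]]].
  assert (Hab := intervals_ok_proper Hint i Hi).
  destruct (P6 i Hi) as [N1 N2].
  destruct (Req_dec x (a i)) as [->|Ha]; [|destruct (Req_dec x (b i)) as [->|Hb]].
  - apply eigfun1_pos_at_end; auto; [exists i; split; auto; lra|].
    intros eta He. destruct (approach_left_end (a i) (b i) Hab eta He) as [y [Hy Hy']].
    exists y; split; auto. now apply (inOmega_of m a b i).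
  - apply eigfun1_pos_at_end; auto; [exists i; split; auto; lra|].
    intros eta He. destruct (approach_right_end (a i) (b i) Hab eta He) as [y [Hy Hy']].
    exists y; split; auto. now apply (inOmega_of m a b i).
  - apply P1, (inOmega_of m a b i); auto.
    destruct Hx as [[Hx1|Hx1] [Hx2|Hx2]]; subst; try congruence; lra.
Qed.

Lemma eigfun1_bounds : exists c C, 0 < c /\ forall x, inOmega m a b x -> c <= psi x <= C.
Proof.
  destruct (uniform_positive_bounds m
             (fun i c C => forall x, a i <= x <= b i -> c <= psi x <= C)) as [c [C [Hc HcC]]].
  - intros j c C c' C' H1 H2 H x Hx. specialize (H x Hx). lra.
  - intros i Hi. assert (Hab := intervals_ok_proper Hint i Hi).
    assert (Cpsi : forall x, a i <= x <= b i -> continuity_pt psi x)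
      by (intros; apply continuity_pt_filterlim, eigfun1_continuous).
    destruct (continuity_ab_min psi (a i) (b i)) as [mn [Hmn1 Hmn2]]; [lra|auto|].
    destruct (continuity_ab_maj psi (a i) (b i)) as [mx [Hmx1 Hmx2]]; [lra|auto|].
    exists (psi mn), (psi mx). split; [now apply (eigfun1_pos_on_bar i mn)|].
    intros x Hx; split; auto.
  - exists c, C; split; auto. intros x [i [Hi Hx]]. apply (HcC i); auto; lra.
Qed.

End PrincipalEigenfunction1.

Arguments eigfun1_continuous {m a b K Rf th lam psi}.
Arguments eigfun1_bounds {m a b A K Rf CR cK CK th lam psi}.

Lemma weighted_mass_continuous_within m a b A (w : R -> R) (F : R -> R -> R) s0 :
  intervals_proper m a b -> continuous_everywhere w ->
  (forall x t, inOmegaBar m a b x -> -A <= t <= A -> cont2 F x t) -> -A <= s0 <= A ->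
  continuous_within (fun s => -A <= s <= A) (fun s => intOmega m a b (fun x => w x * F x s)) s0.
Proof.
  intros Ho Hw HF Hs0.
  apply (intOmega_continuous_within m a b (fun s x => w x * F x s)); auto.
  - intros i Hi y Hy. apply continuity_2d_pt_mult; [now apply continuity_2d_pt_snd|].
    apply (continuity_2d_pt_swap F), cont2_continuity_2d_pt, HF; auto.
    now apply (inOmegaBar_of m a b i).
  - intros s Hs. apply ex_intOmega_of_continuous_on_bar; auto.
    apply continuous_on_bar_mult; [now apply continuous_on_bar_everywhere|].
    intros i Hi y Hy. apply (continuity_2d_pt_partial1 F y s), cont2_continuity_2d_pt, HF; auto.
    now apply (inOmegaBar_of m a b i).
Qed.

Section PrincipalEigenfunction2.

Variables (m : nat) (a b : nat -> R) (A : R) (K : R -> R) (Rf : R -> R -> R)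
  (eps mu : R) (xi : R -> R -> R).
Hypothesis HA : 0 < A.
Hypothesis Hint : intervals_ok m a b.
Hypothesis Hxi : principal_eigfun2 m a b A K Rf eps mu xi.

Let Ho := intervals_ok_proper Hint.

Lemma eigfun2_slice_continuous s : continuous_everywhere (fun x => xi x s).
Proof. destruct Hxi as [_ [X2 _]]. intros y; now apply ex_derive_continuous_R. Qed.

Lemma eigfun2_nonneg x th : inOmega m a b x -> -A <= th <= A -> 0 <= xi x th.
Proof.
  intros Hx Hth. destruct Hxi as [X1 [_ [_ [X4 _]]]].
  apply (continuous_nonneg_of_approach (fun t => xi x t)); [now apply ex_derive_continuous_R|].
  intros eta He. destruct (Rlt_le_dec th A) as [Hl|Hr].
  - destruct (approach_left_end th A Hl eta He) as [t [Ht Ht']].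
    exists t; split; auto. apply X1; auto; lra.
  - destruct (approach_right_end (-A) th ltac:(lra) eta He) as [t [Ht Ht']].
    exists t; split; auto. apply X1; auto; lra.
Qed.

Lemma weighted_mass_pos (w : R -> R) s : continuous_everywhere w ->
  (forall x, inOmega m a b x -> 0 < w x) -> -A < s < A ->
  0 < intOmega m a b (fun x => w x * xi x s).
Proof.
  intros Hw Hb Hs. destruct Hxi as [X1 _].
  apply intOmega_pos; [apply Hint|auto| |].
  - apply continuous_on_bar_everywhere, continuous_everywhere_mult; auto.
    apply eigfun2_slice_continuous.
  - intros i Hi x Hx. assert (Hx' := inOmega_of m a b i x Hi Hx).
    apply Rmult_lt_0_compat; auto.
Qed.

Lemma weighted_mass_nonneg (w : R -> R) s : continuous_everywhere w ->
  (forall x, inOmega m a b x -> 0 <= w x) -> -A <= s <= A ->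
  0 <= intOmega m a b (fun x => w x * xi x s).
Proof.
  intros Hw Hb Hs. apply intOmega_nonneg; auto.
  - apply ex_intOmega_of_continuous, continuous_everywhere_mult; auto.
    apply eigfun2_slice_continuous.
  - intros i Hi x Hx. assert (Hx' := inOmega_of m a b i x Hi Hx).
    apply Rmult_le_pos; auto. now apply eigfun2_nonneg.
Qed.

Lemma weighted_mass_compare (w : R -> R) c C s : continuous_everywhere w ->
  (forall x, inOmega m a b x -> c <= w x <= C) -> -A <= s <= A ->
  c * intOmega m a b (fun x => xi x s) <= intOmega m a b (fun x => w x * xi x s) <=
  C * intOmega m a b (fun x => xi x s).
Proof.
  intros Hw Hb Hs. assert (Cxi := eigfun2_slice_continuous s).
  assert (I0 : ex_intOmega m a b (fun x => xi x s)) by now apply ex_intOmega_of_continuous.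
  assert (I1 : ex_intOmega m a b (fun x => w x * xi x s))
    by now apply ex_intOmega_of_continuous, continuous_everywhere_mult.
  rewrite <- !(intOmega_scal m a b _ _ I0).
  split; apply intOmega_le; auto using ex_intOmega_scal;
    intros i Hi x Hx; assert (Hx' := inOmega_of m a b i x Hi Hx);
    assert (H0 := eigfun2_nonneg x s Hx' Hs); destruct (Hb x Hx'); nra.
Qed.

Lemma weighted_mass_dth_at_ends (w : R -> R) :
  intOmega m a b (fun x => w x * dth xi x A) = 0 /\
  intOmega m a b (fun x => w x * dth xi x (-A)) = 0.
Proof.
  destruct Hxi as [_ [_ [_ [_ [_ [_ [_ [_ X9]]]]]]]].
  split; rewrite <- (intOmega_zero m a b); apply intOmega_ext; auto; intros i Hi x Hx;
    destruct (X9 x (inOmegaBar_of m a b i x Hi ltac:(lra))) as [E1 E2].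
  - rewrite E2; ring.
  - rewrite E1; ring.
Qed.

Lemma eigfun2_mass_max : exists t, -A <= t <= A /\ 0 < intOmega m a b (fun x => xi x t) /\
  forall s, -A <= s <= A -> intOmega m a b (fun x => xi x s) <= intOmega m a b (fun x => xi x t).
Proof.
  destruct Hxi as [_ [_ [_ [_ [_ [X6 _]]]]]].
  set (H0 := fun s => intOmega m a b (fun x => xi x s)).
  assert (E1 : forall s, intOmega m a b (fun x => 1 * xi x s) = H0 s).
  { intros s. apply intOmega_ext; auto. intros; ring. }
  assert (CH0 : forall s, continuous (fun s => H0 (clamp A s)) s).
  { apply continuous_clamp_of_within; [lra|]. intros s0 Hs0.
    apply (continuous_within_ext _ _ _ _ E1), weighted_mass_continuous_within; auto.
    - apply continuous_everywhere_const.
    - intros x t Hx Ht. exact (proj1 (X6 x t Hx Ht)). }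
  destruct (continuity_ab_maj (fun s => H0 (clamp A s)) (-A) A) as [t [Hmax Ht]]; [lra| |].
  { intros; apply continuity_pt_filterlim, CH0. }
  exists t. rewrite (clamp_id A t Ht) in Hmax.
  assert (Hmax' : forall s, -A <= s <= A -> H0 s <= H0 t).
  { intros s Hs. specialize (Hmax s Hs). now rewrite (clamp_id A s Hs) in Hmax. }
  split; [exact Ht|split; [|exact Hmax']].
  apply Rlt_le_trans with (H0 0); [|apply Hmax'; lra].
  rewrite <- E1. apply weighted_mass_pos; [apply continuous_everywhere_const|intros; lra|lra].
Qed.

End PrincipalEigenfunction2.

Arguments eigfun2_slice_continuous {m a b A K Rf eps mu xi}.
Arguments eigfun2_nonneg {m a b A K Rf eps mu xi}.
Arguments weighted_mass_pos {m a b A K Rf eps mu xi}.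
Arguments weighted_mass_nonneg {m a b A K Rf eps mu xi}.
Arguments weighted_mass_compare {m a b A K Rf eps mu xi}.
Arguments weighted_mass_dth_at_ends {m a b A K Rf eps mu xi}.
Arguments eigfun2_mass_max {m a b A K Rf eps mu xi}.

(** * Comparison principles for [f'' <= - k^2 f] and [f'' >= k2 f] *)

Lemma cos_nonneg_half_period c k x : 0 < k ->
  c - PI / (2 * k) <= x <= c + PI / (2 * k) -> 0 <= cos (k * (x - c)).
Proof.
  intros Hk Hx.
  assert (E1 : k * (- (PI / (2 * k))) <= k * (x - c)) by (apply Rmult_le_compat_l; lra).
  assert (E2 : k * (x - c) <= k * (PI / (2 * k))) by (apply Rmult_le_compat_l; lra).
  replace (k * (- (PI / (2 * k)))) with (- (PI / 2)) in E1 by (field; lra).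
  replace (k * (PI / (2 * k))) with (PI / 2) in E2 by (field; lra).
  apply cos_ge_0; lra.
Qed.

(** Sturm comparison with [cos (k (x - c))]: the Wronskian-type quantity [W] is
    nonincreasing but has the wrong sign difference at [c -+ PI / (2 k)]. *)
Lemma no_positive_supersolution (f f1 f2 : R -> R) c k : 0 < k ->
  (forall x, c - PI / (2 * k) <= x <= c + PI / (2 * k) ->
     is_derive f x (f1 x) /\ is_derive f1 x (f2 x) /\ 0 < f x /\ f2 x <= - (k ^ 2) * f x) ->
  False.
Proof.
  intros Hk H.
  set (l := c - PI / (2 * k)) in H. set (r := c + PI / (2 * k)) in H.
  assert (HPI := PI_RGT_0).
  assert (Hq : 0 < PI / (2 * k)) by (apply Rdiv_lt_0_compat; lra).
  assert (Hlr : l <= r) by (unfold l, r; lra).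
  set (W := fun x => f1 x * cos (k * (x - c)) + f x * (k * sin (k * (x - c)))).
  set (dW := fun x => (f2 x + k ^ 2 * f x) * cos (k * (x - c))).
  assert (HW : forall x, l <= x <= r -> is_derive W x (dW x)).
  { intros x Hx. destruct (H x Hx) as [D1 [D2 _]].
    assert (Dc : is_derive (fun x => cos (k * (x - c))) x (- k * sin (k * (x - c))))
      by (auto_derive; auto; ring_R).
    assert (Ds : is_derive (fun x => k * sin (k * (x - c))) x (k * k * cos (k * (x - c))))
      by (auto_derive; auto; ring_R).
    eapply is_derive_ext; [reflexivity|].
    replace (dW x) with (plus (plus (mult (f2 x) (cos (k * (x - c))))
                                    (mult (f1 x) (- k * sin (k * (x - c)))))
                              (plus (mult (f1 x) (k * sin (k * (x - c))))
                                    (mult (f x) (k * k * cos (k * (x - c))))))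
      by (unfold dW, plus, mult; simpl; ring).
    apply (is_derive_plus (fun x => f1 x * cos (k * (x - c))) (fun x => f x * (k * sin (k * (x - c))))).
    - apply (is_derive_mult f1 (fun x => cos (k * (x - c)))); auto. intros; apply Rmult_comm.
    - apply (is_derive_mult f (fun x => k * sin (k * (x - c)))); auto. intros; apply Rmult_comm. }
  assert (Hmono : W r <= W l).
  { apply (nonincreasing_of_derive_nonpos W dW l r Hlr).
    - intros x Hx; apply HW; lra.
    - intros x Hx; apply (is_derive_continuous_R W x (dW x)), HW, Hx.
    - intros x Hx. destruct (H x ltac:(lra)) as [_ [_ [Hp Hf2]]].
      apply Rmult_le_0_r; [nra|apply cos_nonneg_half_period; auto; unfold l, r in *; lra]. }
  unfold W in Hmono.
  replace (k * (r - c)) with (PI / 2) in Hmono by (unfold r; field; lra).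
  replace (k * (l - c)) with (- (PI / 2)) in Hmono by (unfold l; field; lra).
  rewrite cos_neg, sin_neg, cos_PI2, sin_PI2 in Hmono.
  destruct (H l ltac:(unfold l, r; lra)) as [_ [_ [Hl _]]].
  destruct (H r ltac:(unfold l, r; lra)) as [_ [_ [Hr _]]].
  nra.
Qed.

(** Starting with [f' (t) >= 0], [f'' >= k2 f >= 0] forces [f' >= k2 f(t) (x - t)],
    hence the quadratic growth below. *)
Lemma convex_growth_right (f F1 f2 : R -> R) t d k2 : 0 < d -> 0 <= k2 ->
  (forall x, t < x < t + d ->
     is_derive f x (F1 x) /\ is_derive F1 x (f2 x) /\ k2 * f x <= f2 x) ->
  (forall x, t <= x <= t + d -> continuous f x /\ continuous F1 x /\ 0 <= f x) ->
  0 <= F1 t -> f t * (1 + k2 * d ^ 2 / 2) <= f (t + d).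
Proof.
  intros Hd Hk HD HC HF.
  assert (Cq : forall c x, continuous (fun y => c * (y - t)) x).
  { intros c x. apply continuous_Rscal, continuous_Rminus; [apply continuous_id|apply continuous_const]. }
  assert (S1 : forall x, t <= x <= t + d -> F1 t <= F1 x).
  { intros x Hx. apply (nondecreasing_of_derive_nonneg F1 f2); try lra.
    - intros y Hy; apply HD; lra.
    - intros y Hy; apply HC; lra.
    - intros y Hy. destruct (HD y ltac:(lra)) as [_ [_ H]].
      destruct (HC y ltac:(lra)) as [_ [_ H']]. nra. }
  assert (S2 : forall x, t <= x <= t + d -> f t <= f x).
  { intros x Hx. apply (nondecreasing_of_derive_nonneg f F1); try lra.
    - intros y Hy; apply HD; lra.
    - intros y Hy; apply HC; lra.
    - intros y Hy. specialize (S1 y ltac:(lra)). lra. }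
  assert (S3 : forall x, t <= x <= t + d -> F1 t + k2 * f t * (x - t) <= F1 x).
  { intros x Hx.
    enough (F1 t - k2 * f t * (t - t) <= F1 x - k2 * f t * (x - t)) by lra.
    apply (nondecreasing_of_derive_nonneg (fun y => F1 y - k2 * f t * (y - t))
             (fun y => f2 y - k2 * f t)); [lra| | |].
    - intros y Hy. destruct (HD y ltac:(lra)) as [_ [D2 _]].
      apply (is_derive_minus F1 (fun y => k2 * f t * (y - t))); auto.
      auto_derive; auto; ring_R.
    - intros y Hy. apply continuous_Rminus; [apply HC; lra|apply Cq].
    - intros y Hy. destruct (HD y ltac:(lra)) as [_ [_ H]]. specialize (S2 y ltac:(lra)). nra. }
  enough (f t - k2 * f t * (t - t) ^ 2 / 2 <= f (t + d) - k2 * f t * (t + d - t) ^ 2 / 2)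
    by (replace (t + d - t) with d in H by ring; nra).
  apply (nondecreasing_of_derive_nonneg (fun y => f y - k2 * f t * (y - t) ^ 2 / 2)
           (fun y => F1 y - k2 * f t * (y - t)) t (t + d)); [lra| | |].
  - intros y Hy. destruct (HD y ltac:(lra)) as [D1 _].
    apply (is_derive_minus f (fun y => k2 * f t * (y - t) ^ 2 / 2)); auto.
    auto_derive; auto. field_simplify. ring_R.
  - intros y Hy. apply continuous_Rminus; [apply HC; lra|].
    apply (continuous_ext (fun y => (y - t) * (k2 * f t / 2 * (y - t)))); [intros; simpl; field|].
    apply continuous_Rmult; [|apply Cq]. apply continuous_Rminus; [apply continuous_id|apply continuous_const].
  - intros y Hy. specialize (S3 y ltac:(lra)). specialize (S1 t ltac:(lra)). lra.
Qed.

Lemma is_derive_reflect (f : R -> R) x l :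
  is_derive f (- x) l -> is_derive (fun y => f (- y)) x (- l).
Proof.
  intros H. replace (- l) with (scal (-1) l) by (unfold scal; simpl; unfold mult; simpl; ring).
  apply (is_derive_comp f Ropp x l (-1)); auto.
  auto_derive; auto.
Qed.

Lemma continuous_reflect (f : R -> R) x : continuous f (- x) -> continuous (fun y => f (- y)) x.
Proof. intros H. apply (continuous_comp Ropp f); auto. apply (continuous_Ropp (fun y => y)), continuous_id. Qed.

Lemma convex_growth_left (f F1 f2 : R -> R) t d k2 : 0 < d -> 0 <= k2 ->
  (forall x, t - d < x < t ->
     is_derive f x (F1 x) /\ is_derive F1 x (f2 x) /\ k2 * f x <= f2 x) ->
  (forall x, t - d <= x <= t -> continuous f x /\ continuous F1 x /\ 0 <= f x) ->
  F1 t <= 0 -> f t * (1 + k2 * d ^ 2 / 2) <= f (t - d).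
Proof.
  intros Hd Hk HD HC HF.
  replace (f t) with (f (- - t)) by now rewrite Ropp_involutive.
  replace (f (t - d)) with (f (- (- t + d))) by (f_equal; ring).
  apply (convex_growth_right (fun y => f (- y)) (fun y => - F1 (- y)) (fun y => f2 (- y))
           (- t) d k2 Hd Hk); [| |rewrite Ropp_involutive; lra].
  - intros x Hx. destruct (HD (- x) ltac:(lra)) as [D1 [D2 Hx2]].
    split; [|split]; auto.
    + now apply is_derive_reflect.
    + replace (f2 (- x)) with (- - f2 (- x)) by ring.
      now apply (is_derive_opp (fun y => F1 (- y))), is_derive_reflect.
  - intros x Hx. destruct (HC (- x) ltac:(lra)) as [C1 [C2 Hx2]].
    split; [|split]; auto.
    + now apply continuous_reflect.
    + now apply (continuous_Ropp (fun y => F1 (- y))), continuous_reflect.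
Qed.

(** With Neumann conditions [F1 (-A) = F1 A = 0] at least one of the two
    directions from [t] allows the growth lemmas on a full length [d <= A]. *)
Lemma convex_growth_in_interval (f F1 f2 : R -> R) A t d k2 :
  0 < d <= A -> 0 <= k2 -> -A <= t <= A ->
  (forall x, -A < x < A -> Rabs (x - t) <= d ->
     is_derive f x (F1 x) /\ is_derive F1 x (f2 x) /\ k2 * f x <= f2 x) ->
  (forall x, -A <= x <= A -> continuous f x /\ continuous F1 x /\ 0 <= f x) ->
  F1 (-A) = 0 -> F1 A = 0 ->
  exists s, -A <= s <= A /\ f t * (1 + k2 * d ^ 2 / 2) <= f s.
Proof.
  intros Hd Hk Ht HD HC FmA FA.
  assert (Hwin : forall x y, x <= y -> y <= x + d -> Rabs (y - x) <= d /\ Rabs (x - y) <= d).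
  { intros x y H1 H2. rewrite (Rabs_right (y - x)), (Rabs_left1 (x - y)); lra. }
  assert (Right : t + d <= A -> 0 <= F1 t -> f t * (1 + k2 * d ^ 2 / 2) <= f (t + d)).
  { intros H1 H2. apply (convex_growth_right f F1 f2); auto; [lra| |].
    - intros x Hx. apply HD; [lra|]. apply (Hwin t x); lra.
    - intros x Hx. apply HC; lra. }
  assert (Left : -A <= t - d -> F1 t <= 0 -> f t * (1 + k2 * d ^ 2 / 2) <= f (t - d)).
  { intros H1 H2. apply (convex_growth_left f F1 f2); auto; [lra| |].
    - intros x Hx. apply HD; [lra|]. apply (Hwin x t); lra.
    - intros x Hx. apply HC; lra. }
  assert (Mono : forall p q, -A <= p <= t -> t <= q <= A -> q - p <= d -> F1 p <= F1 q).
  { intros p q Hp Hq Hpq. apply (nondecreasing_of_derive_nonneg F1 f2); [lra| | |].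
    - intros x Hx. apply HD; [lra|]. apply Rabs_le; lra.
    - intros x Hx. apply HC; lra.
    - intros x Hx. destruct (HD x ltac:(lra) ltac:(apply Rabs_le; lra)) as [_ [_ H]].
      destruct (HC x ltac:(lra)) as [_ [_ H']]. nra. }
  destruct (Rle_dec 0 (F1 t)) as [Hpos|Hneg].
  - destruct (Rle_dec (t + d) A) as [HR|HR].
    + exists (t + d); split; [lra|auto].
    + assert (F1 t <= F1 A) by (apply Mono; lra).
      exists (t - d); split; [lra|]. apply Left; lra.
  - destruct (Rle_dec (-A) (t - d)) as [HL|HL].
    + exists (t - d); split; [lra|]. apply Left; lra.
    + assert (F1 (-A) <= F1 t) by (apply Mono; lra). lra.
Qed.

(** * The ODE satisfied by [h(theta) = int_Omega psi xi(., theta)] *)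

Lemma locally_open_interval (A th : R) : -A < th < A -> locally th (fun t => -A < t < A).
Proof.
  intros H. apply (locally_interval _ th (Finite (-A)) (Finite A)); simpl; try lra.
  intros; lra.
Qed.

Section WeightedMassODE.

Variables (m : nat) (a b : nat -> R) (A : R) (K : R -> R) (Rf : R -> R -> R)
  (CR cK CK ths lam eps mu : R) (psi : R -> R) (xi : R -> R -> R).
Hypothesis Hint : intervals_ok m a b.
Hypothesis HK : K_ok m a b K cK CK.
Hypothesis HR : R_ok m a b A Rf CR.
Hypothesis Hths : -A <= ths <= A.
Hypothesis Hpsi : principal_eigfun1 m a b K Rf ths lam psi.
Hypothesis Hxi : principal_eigfun2 m a b A K Rf eps mu xi.

Let Ho := intervals_ok_proper Hint.
Let Cpsi := eigfun1_continuous Hpsi.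

Let Cpsi2 : continuous_on_bar m a b (Derive_n psi 2).
Proof.
  pose proof Hpsi as [_ [_ [_ [P4 _]]]]. intros i Hi x Hx.
  exact (proj2 (proj2 (P4 x (inOmegaBar_of m a b i x Hi Hx)))).
Qed.

Lemma cont2_slice_continuous_on_bar (F : R -> R -> R) t : -A <= t <= A ->
  (forall x, inOmegaBar m a b x -> cont2 F x t) -> continuous_on_bar m a b (fun x => F x t).
Proof.
  intros Ht HF i Hi x Hx. apply (continuity_2d_pt_partial1 F x t), cont2_continuity_2d_pt, HF.
  now apply (inOmegaBar_of m a b i).
Qed.

Lemma is_derive_weighted_mass (F dF : R -> R -> R) th :
  (forall x t, is_derive (fun t => F x t) t (dF x t)) ->
  (forall x t, inOmegaBar m a b x -> -A <= t <= A -> cont2 dF x t) ->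
  locally th (fun t => ex_intOmega m a b (fun x => psi x * F x t)) ->
  -A < th < A ->
  is_derive (fun t => intOmega m a b (fun x => psi x * F x t)) th
    (intOmega m a b (fun x => psi x * dF x th)).
Proof.
  intros Hd Hc Hl Hth.
  assert (HD : forall x u, Derive (fun t => psi x * F x t) u = psi x * dF x u).
  { intros x u. rewrite Derive_scal. f_equal. now apply is_derive_unique. }
  replace (intOmega m a b (fun x => psi x * dF x th))
    with (intOmega m a b (fun x => Derive (fun u => psi x * F x u) th))
    by (apply intOmega_ext; auto).
  apply (is_derive_intOmega_param m a b (fun t x => psi x * F x t)); auto.
  - intros t x. apply ex_derive_scal. eexists; apply Hd.
  - intros i Hi x Hx.
    apply (continuity_2d_pt_ext (fun u v => psi v * dF v u)); [intros; now rewrite HD|].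
    apply continuity_2d_pt_mult; [now apply continuity_2d_pt_snd|].
    apply (continuity_2d_pt_swap dF), cont2_continuity_2d_pt, Hc; [|lra].
    now apply (inOmegaBar_of m a b i).
Qed.

Lemma weighted_mass_derivatives th : -A < th < A ->
  is_derive (fun t => intOmega m a b (fun x => psi x * xi x t)) th
      (intOmega m a b (fun x => psi x * dth xi x th)) /\
  is_derive (fun t => intOmega m a b (fun x => psi x * dth xi x t)) th
      (intOmega m a b (fun x => psi x * dthth xi x th)).
Proof.
  intros Hth.
  pose proof Hxi as [_ [X2 [_ [X4 [X5 [X6 _]]]]]].
  split.
  - apply (is_derive_weighted_mass xi (dth xi)); auto.
    + intros x t. now apply (Derive_correct (fun t => xi x t)).
    + intros x t H1 H2. exact (proj1 (proj2 (proj2 (X6 x t H1 H2)))).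
    + apply filter_forall. intros t. apply ex_intOmega_of_continuous; auto.
      apply continuous_everywhere_mult; auto. intros y; now apply ex_derive_continuous_R.
  - apply (is_derive_weighted_mass (dth xi) (dthth xi)); auto.
    + intros x t. now apply (Derive_correct (fun t => dth xi x t)).
    + intros x t H1 H2. exact (proj2 (proj2 (proj2 (proj2 (X6 x t H1 H2))))).
    + eapply filter_imp; [|apply (locally_open_interval A th Hth)]. intros t Ht.
      apply ex_intOmega_of_continuous_on_bar; auto.
      apply continuous_on_bar_mult; [now apply continuous_on_bar_everywhere|].
      apply cont2_slice_continuous_on_bar; [lra|].
      intros x Hx. exact (proj1 (proj2 (proj2 (X6 x t Hx ltac:(lra))))).
Qed.

Lemma weighted_mass_tested_eigfun2 th : -A < th < A ->
  eps ^ 2 * intOmega m a b (fun x => psi x * dthth xi x th) =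
  intOmega m a b (fun x => (- Derive_n psi 2 x) * xi x th)
  + intOmega m a b (fun x => xi x th * Lop m a b K psi x)
  - intOmega m a b (fun x => psi x * xi x th * Rf x th)
  - mu * intOmega m a b (fun x => psi x * xi x th).
Proof.
  intros Hth. assert (Hth' : -A <= th <= A) by lra.
  pose proof Hpsi as [_ [P2 [P3 [_ [_ P6]]]]].
  pose proof Hxi as [_ [X2 [X3 [_ [_ [X6 [X7 [X8 _]]]]]]]].
  assert (Cxi := eigfun2_slice_continuous Hxi th).
  assert (Cxi2 : continuous_on_bar m a b (fun x => dxx xi x th)).
  { apply cont2_slice_continuous_on_bar; auto.
    intros x Hx. exact (proj1 (proj2 (proj2 (proj2 (X6 x th Hx Hth'))))). }
  assert (Cxith : continuous_on_bar m a b (fun x => dthth xi x th)).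
  { apply cont2_slice_continuous_on_bar; auto.
    intros x Hx. exact (proj2 (proj2 (proj2 (proj2 (X6 x th Hx Hth'))))). }
  assert (CR1 := R_continuous_on_bar HR Hth').
  assert (CLxi : continuous_everywhere (Lop m a b K (fun y => xi y th)))
    by now apply Lop_continuous, (K_continuous HK).
  assert (Eparts : intOmega m a b (fun x => psi x * - dxx xi x th) =
                   intOmega m a b (fun x => (- Derive_n psi 2 x) * xi x th)).
  { apply (intOmega_by_parts_Neumann m a b psi (fun y => xi y th) Ho P2 P3
             (fun x => X2 x th) (fun x => X3 x th) Cpsi2 Cxi2 P6).
    intros i Hi; apply (X8 i th Hi Hth'). }
  rewrite <- Eparts.
  rewrite <- (Lop_symmetric m a b K psi (fun y => xi y th) Ho Cpsi Cxi (K_continuous HK)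
                (proj1 (proj2 (proj2 HK)))).
  rewrite <- !intOmega_scal, <- !intOmega_plus, <- !intOmega_minus by integrable_on_Omega.
  apply intOmega_ext; auto. intros i Hi x Hx. cbv beta.
  specialize (X7 x th (inOmega_of m a b i x Hi Hx) Hth).
  replace (eps ^ 2 * (psi x * dthth xi x th)) with (psi x * (eps ^ 2 * dthth xi x th)) by ring.
  replace (eps ^ 2 * dthth xi x th) with
    (- dxx xi x th + Lop m a b K (fun y => xi y th) x - Rf x th * xi x th - mu * xi x th)
    by lra.
  ring.
Qed.

Lemma weighted_mass_tested_eigfun1 th : -A <= th <= A ->
  intOmega m a b (fun x => (- Derive_n psi 2 x) * xi x th)
  + intOmega m a b (fun x => xi x th * Lop m a b K psi x) =
  intOmega m a b (fun x => psi x * xi x th * Rf x ths)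
  + lam * intOmega m a b (fun x => psi x * xi x th).
Proof.
  intros Hth. pose proof Hpsi as [_ [_ [_ [_ [P5 _]]]]].
  assert (Cxi := eigfun2_slice_continuous Hxi th).
  assert (CR2 := R_continuous_on_bar HR Hths).
  assert (CLpsi : continuous_everywhere (Lop m a b K psi))
    by now apply Lop_continuous, (K_continuous HK).
  rewrite <- !intOmega_scal, <- !intOmega_plus by integrable_on_Omega.
  apply intOmega_ext; auto. intros i Hi x Hx. cbv beta.
  specialize (P5 x (inOmega_of m a b i x Hi Hx)).
  replace (Lop m a b K psi x) with (Derive_n psi 2 x + (Rf x ths - 0) * psi x + lam * psi x)
    by lra.
  ring.
Qed.

Lemma weighted_mass_identity th : -A < th < A ->
  eps ^ 2 * intOmega m a b (fun x => psi x * dthth xi x th) =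
  (lam - mu) * intOmega m a b (fun x => psi x * xi x th)
  + intOmega m a b (fun x => psi x * xi x th * (Rf x ths - Rf x th)).
Proof.
  intros Hth.
  assert (Cpx := continuous_everywhere_mult _ _ Cpsi (eigfun2_slice_continuous Hxi th)).
  assert (CR1 := R_continuous_on_bar HR (th:=th) ltac:(lra)).
  assert (CR2 := R_continuous_on_bar HR Hths).
  replace (intOmega m a b (fun x => psi x * xi x th * (Rf x ths - Rf x th))) with
    (intOmega m a b (fun x => psi x * xi x th * Rf x ths)
     - intOmega m a b (fun x => psi x * xi x th * Rf x th)).
  2: { rewrite <- intOmega_minus by integrable_on_Omega. apply intOmega_ext; auto.
       intros; ring. }
  rewrite weighted_mass_tested_eigfun2 by auto.
  assert (E := weighted_mass_tested_eigfun1 th ltac:(lra)). lra.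
Qed.

Lemma weighted_mass_second_derivative_bound th : -A < ths < A -> -A < th < A ->
  Rabs (eps ^ 2 * intOmega m a b (fun x => psi x * dthth xi x th)
        - (lam - mu) * intOmega m a b (fun x => psi x * xi x th))
  <= CR * Rabs (ths - th) * intOmega m a b (fun x => psi x * xi x th).
Proof.
  intros Hths' Hth. rewrite weighted_mass_identity by auto.
  replace (_ + _ - _) with (intOmega m a b (fun x => psi x * xi x th * (Rf x ths - Rf x th)))
    by ring.
  assert (Cxi := eigfun2_slice_continuous Hxi th).
  assert (Cpx : continuous_on_bar m a b (fun x => psi x * xi x th))
    by now apply continuous_on_bar_everywhere, continuous_everywhere_mult.
  assert (CR1 := R_continuous_on_bar (th:=th) HR ltac:(lra)).
  assert (CR2 := R_continuous_on_bar HR Hths).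
  rewrite <- intOmega_scal by integrable_on_Omega.
  apply intOmega_abs_le; auto; try integrable_on_Omega.
  intros i Hi x Hx. assert (Hx' := inOmega_of m a b i x Hi Hx).
  assert (Hpos : 0 <= psi x * xi x th).
  { apply Rmult_le_pos; [now apply Rlt_le, Hpsi|apply Rlt_le, Hxi; auto]. }
  rewrite Rabs_mult, (Rabs_right (psi x * xi x th)) by lra.
  assert (L := R_lipschitz_theta HR Hx' Hths' Hth). nra.
Qed.

Lemma weighted_mass_concave th k : -A < ths < A -> -A < th < A ->
  lam - mu + CR * Rabs (ths - th) <= - k ->
  eps ^ 2 * intOmega m a b (fun x => psi x * dthth xi x th)
  <= - k * intOmega m a b (fun x => psi x * xi x th).
Proof.
  intros Hths' Hth Hk.
  assert (HE := weighted_mass_second_derivative_bound th Hths' Hth).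
  assert (Hh := weighted_mass_nonneg (A:=A) ltac:(lra) Hint Hxi psi th Cpsi
                  (fun x Hx => Rlt_le _ _ (proj1 Hpsi x Hx)) ltac:(lra)).
  apply Rabs_le_between in HE.
  assert ((lam - mu + CR * Rabs (ths - th) + k) * intOmega m a b (fun x => psi x * xi x th) <= 0)
    by (apply Rmult_le_0_r; lra).
  lra.
Qed.

Lemma weighted_mass_convex th k : -A < ths < A -> -A < th < A ->
  k + CR * Rabs (ths - th) <= lam - mu ->
  k * intOmega m a b (fun x => psi x * xi x th)
  <= eps ^ 2 * intOmega m a b (fun x => psi x * dthth xi x th).
Proof.
  intros Hths' Hth Hk.
  assert (HE := weighted_mass_second_derivative_bound th Hths' Hth).
  assert (Hh := weighted_mass_nonneg (A:=A) ltac:(lra) Hint Hxi psi th Cpsi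
                  (fun x Hx => Rlt_le _ _ (proj1 Hpsi x Hx)) ltac:(lra)).
  apply Rabs_le_between in HE.
  assert ((lam - mu - CR * Rabs (ths - th) - k) * intOmega m a b (fun x => psi x * xi x th) >= 0)
    by (apply Rle_ge, Rmult_le_pos; lra).
  lra.
Qed.

Lemma weighted_mass_growth t d k2 : 0 < d <= A -> 0 <= k2 -> -A <= t <= A ->
  (forall x, -A < x < A -> Rabs (x - t) <= d ->
     k2 * intOmega m a b (fun y => psi y * xi y x) <=
     intOmega m a b (fun y => psi y * dthth xi y x)) ->
  exists s, -A <= s <= A /\
    intOmega m a b (fun y => psi y * xi y t) * (1 + k2 * d ^ 2 / 2) <=
    intOmega m a b (fun y => psi y * xi y s).
Proof.
  intros Hd Hk Ht Hwin.
  assert (HA0 : 0 < A) by lra. assert (HA : 0 <= A) by lra.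
  assert (Psi0 : forall x, inOmega m a b x -> 0 <= psi x) by (intros; now apply Rlt_le, Hpsi).
  pose proof Hxi as [_ [_ [_ [_ [_ [X6 _]]]]]].
  set (f := fun s => intOmega m a b (fun y => psi y * xi y (clamp A s))).
  set (F1 := fun s => intOmega m a b (fun y => psi y * dth xi y (clamp A s))).
  assert (Cf : forall s, continuous f s).
  { apply (continuous_clamp_of_within A (fun s => intOmega m a b (fun y => psi y * xi y s)) HA).
    intros s0 Hs0. apply weighted_mass_continuous_within; auto.
    intros x u Hx Hu. exact (proj1 (X6 x u Hx Hu)). }
  assert (CF1 : forall s, continuous F1 s).
  { apply (continuous_clamp_of_within A (fun s => intOmega m a b (fun y => psi y * dth xi y s)) HA).
    intros s0 Hs0. apply weighted_mass_continuous_within; auto.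
    intros x u Hx Hu. exact (proj1 (proj2 (proj2 (X6 x u Hx Hu)))). }
  assert (Hloc : forall (G : R -> R) x, -A < x < A ->
            locally x (fun s => G s = G (clamp A s))).
  { intros G x Hx. eapply filter_imp; [|apply (locally_open_interval A x Hx)].
    intros s Hs. rewrite clamp_id; auto; lra. }
  destruct (convex_growth_in_interval f F1
              (fun s => intOmega m a b (fun y => psi y * dthth xi y s)) A t d k2 Hd Hk Ht)
    as [s [Hs Hgrow]].
  - intros x Hx Hxt. destruct (weighted_mass_derivatives x Hx) as [D1 D2].
    unfold f, F1. rewrite (clamp_id A x) by lra. split; [|split].
    + apply (is_derive_ext_loc (fun s => intOmega m a b (fun y => psi y * xi y s)));
        [apply (Hloc (fun s => intOmega m a b (fun y => psi y * xi y s)) x Hx)|exact D1].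
    + apply (is_derive_ext_loc (fun s => intOmega m a b (fun y => psi y * dth xi y s)));
        [apply (Hloc (fun s => intOmega m a b (fun y => psi y * dth xi y s)) x Hx)|exact D2].
    + now apply Hwin.
  - intros x Hx. split; [|split]; auto. unfold f. rewrite (clamp_id A x Hx).
    now apply (weighted_mass_nonneg HA0 Hint Hxi).
  - unfold F1. rewrite clamp_id by lra. apply (weighted_mass_dth_at_ends Hint Hxi).
  - unfold F1. rewrite clamp_id by lra. apply (weighted_mass_dth_at_ends Hint Hxi).
  - exists s; split; auto. unfold f in Hgrow. now rewrite !clamp_id in Hgrow by lra.
Qed.

End WeightedMassODE.

Arguments weighted_mass_derivatives {m a b A K Rf ths lam eps mu psi xi}.
Arguments weighted_mass_growth {m a b A K Rf ths lam eps mu psi xi}.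
Arguments weighted_mass_concave {m a b A K Rf CR cK CK ths lam eps mu psi xi}.
Arguments weighted_mass_convex {m a b A K Rf CR cK CK ths lam eps mu psi xi}.

(** * Convergence of [mu eps] *)

Lemma nat_interval_cover (N : nat) (u : R) : (1 <= N)%nat -> 0 <= u <= INR N ->
  exists j, (j < N)%nat /\ INR j <= u <= INR j + 1.
Proof.
  induction N as [|N IH]; intros HN Hu; [lia|].
  destruct (Nat.eq_dec N 0) as [->|HN0].
  - exists 0%nat. split; [lia|]. simpl in *. lra.
  - destruct (Rle_dec u (INR N)) as [Hle|Hgt].
    + destruct (IH ltac:(lia) ltac:(lra)) as [j [Hj Hj']]. exists j; split; [lia|auto].
    + exists N; split; [lia|]. rewrite S_INR in Hu. lra.
Qed.

(** The midpoints of [N] equal subintervals of [[-A, A]], [N > A / r]. *)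
Lemma interval_finite_net A r : 0 < A -> 0 < r -> exists (N : nat) (th : nat -> R),
  (forall j, (j < N)%nat -> -A < th j < A) /\
  forall t, -A <= t <= A -> exists j, (j < N)%nat /\ Rabs (t - th j) <= r.
Proof.
  intros HA Hr.
  destruct (INR_unbounded (A / r)) as [N HN].
  assert (HN0 : 0 < INR N) by (assert (0 < A / r) by (apply Rdiv_lt_0_compat; lra); lra).
  assert (HN1 : (1 <= N)%nat) by (destruct N; [simpl in HN0; lra|lia]).
  assert (HAN : A / INR N <= r).
  { apply (Rmult_le_reg_r (INR N)); auto. unfold Rdiv.
    rewrite Rmult_assoc, Rinv_l, Rmult_1_r by lra.
    apply (Rmult_lt_compat_r r) in HN; [|lra].
    replace (A / r * r) with A in HN by (field; lra). lra. }
  exists N, (fun j => -A + (2 * INR j + 1) * A / INR N). split.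
  - intros j Hj.
    assert (HjN : INR j + 1 <= INR N) by (rewrite <- S_INR; apply le_INR; lia).
    assert (0 <= INR j) by apply pos_INR.
    assert (E : (2 * INR j + 1) * A / INR N = (2 * INR j + 1) / INR N * A) by (field; lra).
    assert (0 < (2 * INR j + 1) / INR N < 2).
    { split; [apply Rdiv_lt_0_compat; lra|].
      apply (Rmult_lt_reg_r (INR N)); auto. unfold Rdiv.
      rewrite Rmult_assoc, Rinv_l, Rmult_1_r by lra. lra. }
    rewrite E. nra.
  - intros t Ht. set (u := (t + A) * INR N / (2 * A)).
    destruct (nat_interval_cover N u HN1) as [j [Hj Hju]].
    { unfold u. split.
      - apply Rdiv_le_0_compat; [apply Rmult_le_pos|]; lra.
      - apply (Rmult_le_reg_r (2 * A)); [lra|]. unfold Rdiv.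
        rewrite Rmult_assoc, Rinv_l, Rmult_1_r by lra. nra. }
    exists j. split; auto.
    replace (t - _) with (A / INR N * (2 * u - 2 * INR j - 1)) by (unfold u; field; lra).
    rewrite Rabs_mult, (Rabs_right (A / INR N)) by (apply Rle_ge, Rdiv_le_0_compat; lra).
    apply Rle_trans with (A / INR N * 1); [|lra].
    apply Rmult_le_compat_l; [apply Rdiv_le_0_compat; lra|]. apply Rabs_le. lra.
Qed.

Lemma inOmega_inhabited m a b : intervals_ok m a b -> exists x, inOmega m a b x.
Proof.
  intros [Hm [Ho _]]. assert (Hab := Ho 0%nat ltac:(lia)).
  exists ((a 0%nat + b 0%nat) / 2), 0%nat. split; [lia|lra].
Qed.

Lemma R_bound_pos m a b A Rf CR : 0 < A -> intervals_ok m a b -> R_ok m a b A Rf CR -> 0 < CR.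
Proof.
  intros HA Hint [_ [_ [_ R4]]]. destruct (inOmega_inhabited m a b Hint) as [x Hx].
  destruct (R4 x 0 Hx) as [H _]; [lra|].
  eapply Rle_lt_trans; [apply Rabs_pos|exact H].
Qed.

Section Convergence.

Variables (A : R) (m : nat) (a b : nat -> R) (Rf : R -> R -> R) (CR : R)
  (K : R -> R) (cK CK : R) (lam mu : R -> R) (theta0 : R).
Hypothesis HA : 0 < A.
Hypothesis Hint : intervals_ok m a b.
Hypothesis HR : R_ok m a b A Rf CR.
Hypothesis HK : K_ok m a b K cK CK.
Hypothesis Heig1 : forall th, -A <= th <= A ->
  is_principal_eig1 m a b K Rf th (fun _ => 0) (lam th).
Hypothesis Heig2 : forall eps, 0 < eps -> is_principal_eig2 m a b A K Rf eps (mu eps).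
Hypothesis Hth0 : -A < theta0 < A.

Lemma mu_le_of_window eps del r : 0 < eps -> 0 < del -> 0 < r ->
  -A < theta0 - r -> theta0 + r < A -> CR * r <= del / 2 ->
  PI * eps < 2 * r * sqrt (del / 2) -> mu eps <= lam theta0 + del.
Proof.
  intros He Hdel Hr Hl Hrt HCRr Heps. apply Rnot_lt_le. intros Hlt.
  assert (HCR := R_bound_pos m a b A Rf CR HA Hint HR).
  assert (Hth0' : -A <= theta0 <= A) by lra.
  destruct (Heig1 theta0 Hth0') as [psi Hpsi]. destruct (Heig2 eps He) as [xi Hxi].
  set (q := sqrt (del / 2)) in Heps.
  assert (Hq : 0 < q) by (apply sqrt_lt_R0; lra).
  assert (Hqq : q * q = del / 2) by (apply sqrt_sqrt; lra).
  set (k := q / eps).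
  assert (Hk : 0 < k) by (apply Rdiv_lt_0_compat; lra).
  assert (Hw : PI / (2 * k) < r).
  { replace (PI / (2 * k)) with (PI * eps / (2 * q)) by (unfold k; field; lra).
    apply Rmult_lt_reg_r with (2 * q); [lra|].
    replace (PI * eps / (2 * q) * (2 * q)) with (PI * eps) by (field; lra). lra. }
  apply (no_positive_supersolution (fun t => intOmega m a b (fun x => psi x * xi x t))
           (fun t => intOmega m a b (fun x => psi x * dth xi x t))
           (fun t => intOmega m a b (fun x => psi x * dthth xi x t)) theta0 k Hk).
  intros x Hx. assert (Hx' : -A < x < A) by lra.
  destruct (weighted_mass_derivatives Hint Hpsi Hxi x Hx') as [D1 D2].
  split; [exact D1|split; [exact D2|split]].
  - apply (weighted_mass_pos Hint Hxi); auto; [apply (eigfun1_continuous Hpsi)|apply Hpsi].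
  - replace (k ^ 2) with ((del / 2) / eps ^ 2) by (unfold k; rewrite <- Hqq; field; lra).
    apply (Rmult_le_reg_l (eps ^ 2)); [apply pow_lt; lra|].
    replace (eps ^ 2 * (- (del / 2 / eps ^ 2) * _)) with
      (- (del / 2) * intOmega m a b (fun y => psi y * xi y x)) by (field; lra).
    apply (weighted_mass_concave Hint HK HR Hth0' Hpsi Hxi x (del / 2) Hth0 Hx').
    enough (CR * Rabs (theta0 - x) <= CR * r) by lra.
    apply Rmult_le_compat_l; [lra|]. apply Rabs_le; lra.
Qed.

Lemma mu_upper_bound del : 0 < del ->
  exists e0, 0 < e0 /\ forall eps, 0 < eps < e0 -> mu eps <= lam theta0 + del.
Proof.
  intros Hdel. assert (HCR := R_bound_pos m a b A Rf CR HA Hint HR).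
  set (r := Rmin (del / (2 * CR)) (Rmin ((theta0 + A) / 2) ((A - theta0) / 2))).
  assert (Hr1 : r <= del / (2 * CR)) by apply Rmin_l.
  assert (Hr2 : r <= (theta0 + A) / 2) by (eapply Rle_trans; [apply Rmin_r|apply Rmin_l]).
  assert (Hr3 : r <= (A - theta0) / 2) by (eapply Rle_trans; [apply Rmin_r|apply Rmin_r]).
  assert (Hr : 0 < r) by (apply Rmin_pos; [apply Rdiv_lt_0_compat|apply Rmin_pos]; lra).
  assert (Hq : 0 < sqrt (del / 2)) by (apply sqrt_lt_R0; lra).
  assert (HPI := PI_RGT_0).
  exists (2 * r * sqrt (del / 2) / PI). split; [apply Rdiv_lt_0_compat; nra|].
  intros eps [He1 He2]. apply (mu_le_of_window eps del r); auto; try lra.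
  - apply Rle_trans with (CR * (del / (2 * CR))); [apply Rmult_le_compat_l; lra|].
    right; field; lra.
  - apply (Rmult_lt_compat_r PI) in He2; [|lra].
    replace (2 * r * sqrt (del / 2) / PI * PI) with (2 * r * sqrt (del / 2)) in He2
      by (field; lra). lra.
Qed.

Lemma eigfun1_uniform_grid r : 0 < r -> exists c C, 0 < c /\
  forall t, -A <= t <= A -> exists th psi, -A < th < A /\ Rabs (t - th) <= r /\
    principal_eigfun1 m a b K Rf th (lam th) psi /\
    forall x, inOmega m a b x -> c <= psi x <= C.
Proof.
  intros Hr. destruct (interval_finite_net A r HA Hr) as [N [th [Hth Hnet]]].
  destruct (uniform_positive_bounds N (fun j c C => exists psi,
              principal_eigfun1 m a b K Rf (th j) (lam (th j)) psi /\
              forall x, inOmega m a b x -> c <= psi x <= C)) as [c [C [Hc HcC]]].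
  - intros j c C c' C' H1 H2 [psi [Hpsi Hb]]. exists psi; split; auto.
    intros x Hx. specialize (Hb x Hx). lra.
  - intros j Hj. assert (Hthj : -A <= th j <= A) by (specialize (Hth j Hj); lra).
    destruct (Heig1 (th j) Hthj) as [psi Hpsi].
    destruct (eigfun1_bounds Hint HK HR Hthj Hpsi) as [c [C [Hc Hb]]].
    exists c, C; split; auto. now exists psi.
  - exists c, C; split; auto. intros t Ht.
    destruct (Hnet t Ht) as [j [Hj Htj]]. destruct (HcC j Hj) as [psi [Hpsi Hb]].
    exists (th j), psi. auto.
Qed.

Hypothesis Hmin : forall th, -A < th < A -> lam theta0 <= lam th.

Lemma growth_ratio_of_mu_below eps del d c C : 0 < eps -> 0 < del -> 0 < d -> 2 * d <= A ->
  CR * (2 * d) <= del / 2 ->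
  (forall t, -A <= t <= A -> exists th psi, -A < th < A /\ Rabs (t - th) <= d /\
     principal_eigfun1 m a b K Rf th (lam th) psi /\
     forall x, inOmega m a b x -> c <= psi x <= C) ->
  mu eps < lam theta0 - del -> c * (1 + del / (2 * eps ^ 2) * d ^ 2 / 2) <= C.
Proof.
  intros He Hdel Hd HdA HCRd Hgrid Hlt.
  assert (HCR := R_bound_pos m a b A Rf CR HA Hint HR).
  destruct (Heig2 eps He) as [xi Hxi].
  destruct (eigfun2_mass_max HA Hint Hxi) as [t [Ht [Hpos Hmax]]].
  destruct (Hgrid t Ht) as [th [psi [Hth [Htth [Hpsi Hb]]]]].
  assert (Hth' : -A <= th <= A) by lra.
  assert (Cpsi := eigfun1_continuous Hpsi).
  set (k2 := del / (2 * eps ^ 2)).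
  assert (Hk2 : 0 <= k2).
  { apply Rdiv_le_0_compat; [|apply Rmult_lt_0_compat; [|apply pow_lt]]; lra. }
  destruct (weighted_mass_growth Hint Hth' Hpsi Hxi t d k2 ltac:(lra) Hk2 Ht)
    as [s [Hs Hgrow]].
  - intros x Hx Hxt.
    apply (Rmult_le_reg_l (eps ^ 2)); [apply pow_lt; lra|].
    replace (eps ^ 2 * (k2 * _)) with
      (del / 2 * intOmega m a b (fun y => psi y * xi y x)) by (unfold k2; field; lra).
    apply (weighted_mass_convex Hint HK HR Hth' Hpsi Hxi x (del / 2) Hth Hx).
    assert (Hwin : CR * Rabs (th - x) <= CR * (2 * d)).
    { apply Rmult_le_compat_l; [lra|].
      replace (th - x) with (- ((t - th) + (x - t))) by ring. rewrite Rabs_Ropp.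
      eapply Rle_trans; [apply Rabs_triang|lra]. }
    assert (Hlam := Hmin th Hth). lra.
  - destruct (weighted_mass_compare HA Hint Hxi psi c C t Cpsi Hb Ht) as [Hlow _].
    destruct (weighted_mass_compare HA Hint Hxi psi c C s Cpsi Hb Hs) as [_ Hup].
    specialize (Hmax s Hs).
    set (H0t := intOmega m a b (fun x => xi x t)) in *.
    assert (HC : 0 <= C).
    { destruct (inOmega_inhabited m a b Hint) as [x Hx].
      assert (Hpx := proj1 Hpsi x Hx). destruct (Hb x Hx). lra. }
    assert (HX : 0 <= k2 * d ^ 2 / 2) by (apply Rmult_le_pos; [apply Rmult_le_pos; nra|lra]).
    apply (Rmult_le_reg_r H0t); [exact Hpos|].
    apply Rle_trans with (intOmega m a b (fun y => psi y * xi y t) * (1 + k2 * d ^ 2 / 2)).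
    { rewrite Rmult_comm, <- Rmult_assoc. apply Rmult_le_compat_r; lra. }
    apply Rle_trans with (C * intOmega m a b (fun x => xi x s)); [lra|].
    apply Rmult_le_compat_l; lra.
Qed.

Lemma mu_lower_bound del : 0 < del ->
  exists e1, 0 < e1 /\ forall eps, 0 < eps < e1 -> lam theta0 - del <= mu eps.
Proof.
  intros Hdel. assert (HCR := R_bound_pos m a b A Rf CR HA Hint HR).
  set (d := Rmin (del / (4 * CR)) (A / 2)).
  assert (Hd : 0 < d) by (apply Rmin_pos; [apply Rdiv_lt_0_compat|]; lra).
  assert (HdA : 2 * d <= A) by (enough (d <= A / 2) by lra; apply Rmin_r).
  assert (HCRd : CR * (2 * d) <= del / 2).
  { apply Rle_trans with (2 * (CR * (del / (4 * CR)))); [|right; field; lra].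
    rewrite Rmult_comm, Rmult_assoc. apply Rmult_le_compat_l; [lra|].
    rewrite Rmult_comm. apply Rmult_le_compat_l; [lra|apply Rmin_l]. }
  destruct (eigfun1_uniform_grid d Hd) as [c [C [Hc Hgrid]]].
  assert (HC : 0 < C).
  { destruct (Hgrid 0 ltac:(lra)) as [th [psi [_ [_ [_ Hb]]]]].
    destruct (inOmega_inhabited m a b Hint) as [x Hx]. specialize (Hb x Hx). lra. }
  set (e1 := sqrt (del * d ^ 2 * c / (4 * C))).
  assert (Hq : 0 < del * d ^ 2 * c / (4 * C)).
  { apply Rdiv_lt_0_compat; [|lra].
    repeat apply Rmult_lt_0_compat; try lra; apply pow_lt; lra. }
  exists e1. split; [now apply sqrt_lt_R0|].
  intros eps [He1 He2]. apply Rnot_lt_le. intros Hlt.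
  assert (Hratio := growth_ratio_of_mu_below eps del d c C He1 Hdel Hd HdA HCRd Hgrid Hlt).
  assert (He1sq : e1 ^ 2 = del * d ^ 2 * c / (4 * C))
    by (unfold e1; rewrite <- Rsqr_pow2; apply Rsqr_sqrt; lra).
  assert (Heps2 : eps ^ 2 * (4 * C) < del * d ^ 2 * c).
  { replace (del * d ^ 2 * c) with (e1 ^ 2 * (4 * C)) by (rewrite He1sq; field; lra).
    apply Rmult_lt_compat_r; [lra|]. nra. }
  assert (Hmul : c * eps ^ 2 + c * del * d ^ 2 / 4 <= C * eps ^ 2).
  { replace (c * eps ^ 2 + c * del * d ^ 2 / 4)
      with (c * (1 + del / (2 * eps ^ 2) * d ^ 2 / 2) * eps ^ 2)
      by (field; lra).
    apply Rmult_le_compat_r; [apply pow_le; lra|exact Hratio]. }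
  assert (0 <= c * eps ^ 2) by (apply Rmult_le_pos; [lra|apply pow_le; lra]).
  lra.
Qed.

End Convergence.

Theorem lemma1 (A : R) (m : nat) (a b : nat -> R) (Rf : R -> R -> R) (CR : R)
  (K : R -> R) (cK CK : R) (lam : R -> R) (mu : R -> R) (theta0 : R) :
  0 < A ->
  intervals_ok m a b ->
  R_ok m a b A Rf CR ->
  K_ok m a b K cK CK ->
  (forall th, -A <= th <= A ->
     is_principal_eig1 m a b K Rf th (fun _ => 0) (lam th)) ->
  (forall eps, 0 < eps -> is_principal_eig2 m a b A K Rf eps (mu eps)) ->
  -A < theta0 < A ->
  (forall th, -A < th < A -> lam theta0 <= lam th) ->
  lam theta0 < 0 ->
  filterlim mu (at_right 0) (locally (lam theta0)).
Proof.
  intros HA Hint HR HK Heig1 Heig2 Hth0 Hmin _.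
  apply filterlim_locally. intros eps. assert (He := cond_pos eps).
  destruct (mu_upper_bound A m a b Rf CR K cK CK lam mu theta0 HA Hint HR HK Heig1 Heig2 Hth0
              (eps / 2) ltac:(lra)) as [e0 [He0 Hup]].
  destruct (mu_lower_bound A m a b Rf CR K cK CK lam mu theta0 HA Hint HR HK Heig1 Heig2 Hth0
              Hmin (eps / 2) ltac:(lra)) as [e1 [He1 Hlow]].
  exists (mkposreal (Rmin e0 e1) (Rmin_pos _ _ He0 He1)). simpl.
  intros y Hy Hy0. change (Rabs (y - 0) < Rmin e0 e1) in Hy.
  rewrite Rminus_0_r, Rabs_right in Hy by lra.
  assert (y < e0) by (eapply Rlt_le_trans; [apply Hy|apply Rmin_l]).
  assert (y < e1) by (eapply Rlt_le_trans; [apply Hy|apply Rmin_r]).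
  specialize (Hup y ltac:(lra)). specialize (Hlow y ltac:(lra)).
  change (Rabs (mu y - lam theta0) < eps). apply Rabs_def1; lra.
Qed.
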